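(* Let $c_1,c_2,c_3,c_4\in\mathbb{R}$ satisfy $c_{13}\neq 1$, $c_{14}\neq 0$, $2(1+c_2)+c_{123}\neq 0$, and $$\lambda_T^2:=\frac{1}{1-c_{13}}>0,\qquad \lambda_V^2:=\frac{(2-c_1)c_1+c_3^2}{2c_{14}(1-c_{13})}>0,\qquad \lambda_S^2:=\frac{c_{123}(2-c_{14})}{c_{14}(1-c_{13})(2+2c_2+c_{123})}>0,$$ with $\lambda_V^2\neq 1$ and $\lambda_S^2\neq 1$. For a unit vector $\mathbf{k}=(k_a)\in S^2$, define the linear maps $Q(\mathbf{k}):\mathcal{W}\to\mathcal{V}$ and $R(\mathbf{k}):\mathcal{V}\to\mathcal{W}$ (with $\mathcal{V}$, $\mathcal{W}$ and $L$ as in the context) by $$Q(\mathbf{k})(N,a)=L^{-1}\Big(\varepsilon_a{}^{cd}k_cN_{db}+k_aa_b-\tfrac12 c_{14}\delta_{ab}k^ca_c\Big),$$ $$R(\mathbf{k})K=\Big(-\varepsilon_a{}^{cd}k_cK_{db}+c_{13}\varepsilon_{abc}k_dK^{(cd)}+c_2\varepsilon_{abc}k^cK,\ \ \tfrac{c_1}{c_{14}}k^aK_{ab}+\tfrac{c_3}{c_{14}}k^aK_{ba}+\tfrac{c_2}{c_{14}}k_bK\Big),$$ and set $P(\mathbf{k})=\begin{pmatrix}0&Q(\mathbf{k})\\R(\mathbf{k})&0\end{pmatrix}$ acting on $\mathcal{V}\oplus\mathcal{W}\cong\mathbb{R}^{21}$ and $M(\mathbf{k})=Q(\mathbf{k})R(\mathbf{k})$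 acting on $\mathcal{V}$. Then for every $\mathbf{k}\in S^2$ the map $M(\mathbf{k})$ is diagonalizable with all eigenvalues in $\{1,\lambda_T^2,\lambda_V^2,\lambda_S^2\}$ (in particular strictly positive), and there exists a family of symmetric positive-definite $21\times 21$ matrices $H(\mathbf{k})$ depending smoothly on $\mathbf{k}\in S^2$ with $H(\mathbf{k})P(\mathbf{k})=P(\mathbf{k})^TH(\mathbf{k})$ for all $\mathbf{k}\in S^2$. Consequently $P(\mathbf{k})$ is diagonalizable with real eigenvalues contained in $\{0,\pm1,\pm\lambda_T,\pm\lambda_V,\pm\lambda_S\}$.
   Context: Notation: $c_{ij}:=c_i+c_j$, $c_{ijk}:=c_i+c_j+c_k$. Indices $a,b,c,d,f\in\{1,2,3\}$ are raised and lowered with the Kronecker delta $\delta_{ab}$, repeated indices are summed, $\varepsilon_{abc}$ is the totally antisymmetric symbol with $\varepsilon_{123}=1$. $\mathcal{V}$ is the 9-dimensional space of real $3\times3$ matrices $K=(K_{ab})$ (not necessarily symmetric), with $K:=\delta^{ab}K_{ab}$ its trace and $K_{(ab)}:=(K_{ab}+K_{ba})/2$. $\mathcal{W}$ is the 12-dimensional space of pairs $(N,a)$ with $N=(N_{ab})$ a real $3\times 3$ matrix and $a=(a_b)\in\mathbb{R}^3$. $L:\mathcal{V}\to\mathcal{V}$ is the linear map $(LK)_{ab}:=K_{ab}-c_{13}K_{(ab)}+\tfrac12c_{123}\delta_{ab}K$, which is invertible when $c_{13}\neq1$ and $2(1+c_2)+c_{123}\neq0$. *)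

From Stdlib Require Import Reals Lra Lia ClassicalEpsilon.
Open Scope R_scope.

(* ---------- finite sums, vectors, matrices (indices are nat, only 0..n-1 used) ---------- *)
Fixpoint sumn (n : nat) (f : nat -> R) : R :=
  match n with O => 0 | S m => sumn m f + f m end.

Definition vec := nat -> R.
Definition mat := nat -> nat -> R.

Definition mmul (n : nat) (A B : mat) : mat :=
  fun i j => sumn n (fun l => A i l * B l j).
Definition transp (A : mat) : mat := fun i j => A j i.

Definition delta (a b : nat) : R := if Nat.eqb a b then 1 else 0.

(* Levi-Civita symbol on {0,1,2} (indices 1,2,3 of the paper shifted to 0,1,2) *)
Definition eps (a b c : nat) : R :=
  match a, b, c with
  | 0%nat, 1%nat, 2%nat => 1 | 1%nat, 2%nat, 0%nat => 1 | 2%nat, 0%nat, 1%nat => 1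
  | 0%nat, 2%nat, 1%nat => -1 | 2%nat, 1%nat, 0%nat => -1 | 1%nat, 0%nat, 2%nat => -1
  | _, _, _ => 0
  end.

Definition sum3 (f : nat -> R) : R := f 0%nat + f 1%nat + f 2%nat.

Definition M3 := nat -> nat -> R.
Definition tr3 (K : M3) : R := sum3 (fun a => K a a).
Definition symp (K : M3) : M3 := fun a b => (K a b + K b a) / 2.

Definition Lmap (c1 c2 c3 : R) (K : M3) : M3 :=
  fun a b => K a b - (c1 + c3) * symp K a b + / 2 * (c1 + c2 + c3) * delta a b * tr3 K.

(* L^{-1}: the (unique, when L is invertible) K with L K = X on indices a,b < 3 *)
Definition Linv (c1 c2 c3 : R) (X : M3) : M3 :=
  epsilon (inhabits (fun _ _ => 0))
    (fun K => forall a b, (a < 3)%nat -> (b < 3)%nat -> Lmap c1 c2 c3 K a b = X a b).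

Definition Qmap (c1 c2 c3 c4 : R) (k : nat -> R) (N : M3) (av : nat -> R) : M3 :=
  Linv c1 c2 c3 (fun a b =>
      sum3 (fun c => sum3 (fun d => eps a c d * k c * N d b))
    + k a * av b
    - / 2 * (c1 + c4) * delta a b * sum3 (fun c => k c * av c)).

Definition RmapN (c1 c2 c3 c4 : R) (k : nat -> R) (K : M3) : M3 :=
  fun a b =>
    - sum3 (fun c => sum3 (fun d => eps a c d * k c * K d b))
    + (c1 + c3) * sum3 (fun c => sum3 (fun d => eps a b c * k d * symp K c d))
    + c2 * sum3 (fun c => eps a b c * k c) * tr3 K.

Definition Rmapa (c1 c2 c3 c4 : R) (k : nat -> R) (K : M3) : nat -> R :=
  fun b =>
    c1 / (c1 + c4) * sum3 (fun a => k a * K a b)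
  + c3 / (c1 + c4) * sum3 (fun a => k a * K b a)
  + c2 / (c1 + c4) * k b * tr3 K.

(* ---------- coordinates: V = R^9 via K_ab <-> index 3a+b;
   V (+) W = R^21 via K_ab <-> 3a+b, N_ab <-> 9+3a+b, a_b <-> 18+b ---------- *)
Definition Kof (v : vec) : M3 := fun a b => v (3 * a + b)%nat.
Definition Nof (v : vec) : M3 := fun a b => v (9 + 3 * a + b)%nat.
Definition aof (v : vec) : nat -> R := fun b => v (18 + b)%nat.

Definition unitv (j : nat) : vec := fun l => if Nat.eqb l j then 1 else 0.

Definition Pmap (c1 c2 c3 c4 : R) (k : nat -> R) (v : vec) : vec :=
  fun i =>
    if Nat.ltb i 9 then Qmap c1 c2 c3 c4 k (Nof v) (aof v) (i / 3)%nat (i mod 3)%nat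
    else if Nat.ltb i 18 then RmapN c1 c2 c3 c4 k (Kof v) ((i - 9) / 3)%nat ((i - 9) mod 3)%nat
    else Rmapa c1 c2 c3 c4 k (Kof v) (i - 18)%nat.

Definition Pmat (c1 c2 c3 c4 : R) (k : nat -> R) : mat :=
  fun i j => Pmap c1 c2 c3 c4 k (unitv j) i.

Definition Mmap (c1 c2 c3 c4 : R) (k : nat -> R) (K : M3) : M3 :=
  Qmap c1 c2 c3 c4 k (RmapN c1 c2 c3 c4 k K) (Rmapa c1 c2 c3 c4 k K).

Definition Mmat (c1 c2 c3 c4 : R) (k : nat -> R) : mat :=
  fun i j => Mmap c1 c2 c3 c4 k (Kof (unitv j)) (i / 3)%nat (i mod 3)%nat.

Definition kvec (x y z : R) : nat -> R :=
  fun i => match i with 0%nat => x | 1%nat => y | _ => z end.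

Definition lamT2 (c1 c3 : R) : R := / (1 - (c1 + c3)).
Definition lamV2 (c1 c3 c4 : R) : R :=
  ((2 - c1) * c1 + c3 ^ 2) / (2 * (c1 + c4) * (1 - (c1 + c3))).
Definition lamS2 (c1 c2 c3 c4 : R) : R :=
  (c1 + c2 + c3) * (2 - (c1 + c4))
  / ((c1 + c4) * (1 - (c1 + c3)) * (2 + 2 * c2 + (c1 + c2 + c3))).

Definition diagonalizable_with (n : nat) (A : mat) (S : R -> Prop) : Prop :=
  exists (T Ti : mat) (mu : nat -> R),
    (forall i j, (i < n)%nat -> (j < n)%nat -> mmul n T Ti i j = delta i j) /\
    (forall i j, (i < n)%nat -> (j < n)%nat -> mmul n Ti T i j = delta i j) /\
    (forall j, (j < n)%nat -> S (mu j)) /\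
    (forall i j, (i < n)%nat -> (j < n)%nat -> mmul n A T i j = T i j * mu j).

Definition sym_posdef (n : nat) (H : mat) : Prop :=
  (forall i j, (i < n)%nat -> (j < n)%nat -> H i j = H j i) /\
  (forall v : vec, (exists i, (i < n)%nat /\ v i <> 0) ->
     0 < sumn n (fun i => v i * sumn n (fun j => H i j * v j))).

Definition continuous3 (f : R -> R -> R -> R) : Prop :=
  forall x y z e, 0 < e -> exists d, 0 < d /\
    forall x' y' z', Rabs (x' - x) < d -> Rabs (y' - y) < d -> Rabs (z' - z) < d ->
      Rabs (f x' y' z' - f x y z) < e.

Definition partial3 (i : nat) (f g : R -> R -> R -> R) : Prop :=
  forall x y z,
    match i with
    | 0%nat => derivable_pt_lim (fun t => f t y z) x (g x y z)
    | 1%nat => derivable_pt_lim (fun t => f x t z) y (g x y z)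
    | _ => derivable_pt_lim (fun t => f x y t) z (g x y z)
    end.

Fixpoint Ck3 (n : nat) (f : R -> R -> R -> R) : Prop :=
  match n with
  | O => continuous3 f
  | S m => continuous3 f /\
           forall i, (i < 3)%nat -> exists g, partial3 i f g /\ Ck3 m g
  end.

Definition smooth3 (f : R -> R -> R -> R) : Prop := forall n, Ck3 n f.

(* The maps [Q(k)] and [R(k)] are rotation equivariant, so conjugating by a
   rotation [F] with [F e3 = k] reduces every claim to [k = e3]. There [M] preserves the
   scalar, vector, tensor and antisymmetric sectors of [K]; the scalar and vector sectors are
   2x2 blocks with eigenvalues [{1, lamS2}] and [{1, lamV2}], the tensor sector has eigenvalue
   [lamT2], the antisymmetric part eigenvalue [1]. Each eigenvector [t] of [M = Q R] with
   eigenvalue [mu > 0] gives the eigenvectors [(+-sqrt mu t, R t)] of [P], and the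
   three-dimensional [ker Q] gives the eigenvalue [0]; this diagonalizes [P]. Finally, if [A]
   is diagonalizable with spectrum [S], the Lagrange projections
   [P_m = prod_(c in S, c <> m) (A - c) / (m - c)] satisfy [P_m A = m P_m] and sum to the
   identity, so [H = sum_m P_m^T P_m] is symmetric positive definite with [H A = A^T H]; it is
   a polynomial in the entries of [P(k)], which is linear in [k], hence smooth. *)

From Stdlib Require Import Reals Lra Lia ClassicalEpsilon List FunctionalExtensionality.
Open Scope R_scope.

Ltac destruct_lt3 a := destruct a as [|[|[|a]]]; [| | | exfalso; lia].
Ltac destruct_lt9 i := destruct i as [|[|[|[|[|[|[|[|[|?]]]]]]]]]; [ | | | | | | | | | exfalso; lia].
Ltac simpl_ltb := repeat match goal with
  | |- context [(?X <? ?n)%nat] => first [ rewrite (proj2 (Nat.ltb_lt X n)) by lia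
                                        | rewrite (proj2 (Nat.ltb_ge X n)) by lia ] end.
(* Side conditions [x <> 0] that follow linearly from a hypothesis [y <> 0]. *)
Ltac solve_nonzero := repeat split; intro HH;
  match goal with H : ?a <> ?b |- _ => apply H; lra end.

Lemma sumn_ext n f g : (forall l, (l < n)%nat -> f l = g l) -> sumn n f = sumn n g.
Proof. induction n; simpl; intros H; auto. rewrite IHn, H; auto. Qed.

Lemma sumn_add n f g : sumn n (fun l => f l + g l) = sumn n f + sumn n g.
Proof. induction n; simpl; [ring|]. rewrite IHn; ring. Qed.

Lemma sumn_sub n f g : sumn n (fun l => f l - g l) = sumn n f - sumn n g.
Proof. induction n; simpl; [ring|]. rewrite IHn; ring. Qed.

Lemma sumn_mul_l n a f : sumn n (fun l => a * f l) = a * sumn n f.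
Proof. induction n; simpl; [ring|]. rewrite IHn; ring. Qed.

Lemma sumn_mul_r n a f : sumn n (fun l => f l * a) = sumn n f * a.
Proof. induction n; simpl; [ring|]. rewrite IHn; ring. Qed.

Lemma sumn_eq0 n f : (forall l, (l < n)%nat -> f l = 0) -> sumn n f = 0.
Proof. induction n; simpl; intros H; auto. rewrite IHn, H; auto; ring. Qed.

Lemma sumn_swap n m f :
  sumn n (fun i => sumn m (fun j => f i j)) = sumn m (fun j => sumn n (fun i => f i j)).
Proof.
  induction n; simpl.
  - symmetry; apply sumn_eq0; auto.
  - rewrite IHn, <- sumn_add; auto.
Qed.

Lemma sumn_split a b f : sumn (a + b) f = sumn a f + sumn b (fun l => f (a + l)%nat).
Proof.
  induction b; simpl.
  - rewrite Nat.add_0_r; ring.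
  - rewrite Nat.add_succ_r; simpl; rewrite IHb; ring.
Qed.

Lemma sumn_mul_sumn n m f g h :
  sumn n (fun x => f x * sumn m (fun a => g x a * h a))
  = sumn m (fun a => sumn n (fun x => f x * g x a) * h a).
Proof.
  rewrite (sumn_ext n _ (fun x => sumn m (fun a => f x * g x a * h a))).
  - rewrite sumn_swap. apply sumn_ext; intros. rewrite <- sumn_mul_r. auto.
  - intros. rewrite <- sumn_mul_l. apply sumn_ext; intros; ring.
Qed.

Lemma sumn_sq_ge0 n g : 0 <= sumn n (fun l => g l * g l).
Proof. induction n; simpl; nra. Qed.

Lemma sumn_sq_le0 n g : sumn n (fun l => g l * g l) <= 0 -> forall l, (l < n)%nat -> g l = 0.
Proof.
  induction n; intros H l hl; [lia|]. simpl in H. pose proof (sumn_sq_ge0 n g).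
  assert (g n * g n = 0) by nra.
  destruct (Nat.eq_dec l n) as [->|ne]; [nra|]. apply IHn; [nra|lia].
Qed.

Lemma delta_diag i : delta i i = 1.
Proof. unfold delta; rewrite Nat.eqb_refl; auto. Qed.

Lemma delta_neq i j : i <> j -> delta i j = 0.
Proof. intros H; unfold delta; destruct (Nat.eqb_spec i j); auto; contradiction. Qed.

Lemma delta_sym i j : delta i j = delta j i.
Proof. unfold delta; rewrite Nat.eqb_sym; auto. Qed.

Lemma delta_sub n I J : (n <= I)%nat -> (n <= J)%nat -> delta I J = delta (I - n) (J - n).
Proof.
  intros h1 h2. unfold delta.
  destruct (Nat.eqb_spec I J); destruct (Nat.eqb_spec (I - n) (J - n)); auto; lia.
Qed.

Lemma sumn_delta_r n f j : (j < n)%nat -> sumn n (fun l => f l * delta l j) = f j.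
Proof.
  induction n; intros H; [lia|]. simpl. destruct (Nat.eq_dec n j).
  - subst. rewrite delta_diag, sumn_eq0; [ring|]. intros l hl; rewrite delta_neq; [ring|lia].
  - rewrite IHn, delta_neq by (auto; lia). ring.
Qed.

Lemma sumn_delta_l n f j : (j < n)%nat -> sumn n (fun l => delta j l * f l) = f j.
Proof.
  intros H. rewrite <- (sumn_delta_r n f j H). apply sumn_ext; intros; rewrite delta_sym; ring.
Qed.

Lemma mmul_assoc n A B C i j : mmul n (mmul n A B) C i j = mmul n A (mmul n B C) i j.
Proof.
  unfold mmul. transitivity (sumn n (fun l => sumn n (fun m => A i m * B m l * C l j))).
  - apply sumn_ext; intros; rewrite <- sumn_mul_r; auto.
  - rewrite sumn_swap. apply sumn_ext; intros. rewrite <- sumn_mul_l. apply sumn_ext; intros; ring.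
Qed.

Lemma mmul_ext_l n A A' B i j : (forall l, (l < n)%nat -> A i l = A' i l) ->
  mmul n A B i j = mmul n A' B i j.
Proof. intros H; unfold mmul; apply sumn_ext; intros; rewrite H; auto. Qed.

Lemma mmul_ext_r n A B B' i j : (forall l, (l < n)%nat -> B l j = B' l j) ->
  mmul n A B i j = mmul n A B' i j.
Proof. intros H; unfold mmul; apply sumn_ext; intros; rewrite H; auto. Qed.

Lemma mmul_delta_l n B i j : (i < n)%nat -> mmul n delta B i j = B i j.
Proof. intros H; apply (sumn_delta_l n (fun l => B l j)); auto. Qed.

Lemma diagonalizable_with_similar n A B S Si (E : R -> Prop) :
  (forall i j, (i < n)%nat -> (j < n)%nat -> mmul n A S i j = mmul n S B i j) ->
  (forall i j, (i < n)%nat -> (j < n)%nat -> mmul n S Si i j = delta i j) ->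
  (forall i j, (i < n)%nat -> (j < n)%nat -> mmul n Si S i j = delta i j) ->
  diagonalizable_with n B E -> diagonalizable_with n A E.
Proof.
  intros HAS HS1 HS2 (T & Ti & mu & h1 & h2 & h3 & h4).
  assert (Hinv : forall X Y Xi Yi i j, (i < n)%nat -> (j < n)%nat ->
    (forall i j, (i < n)%nat -> (j < n)%nat -> mmul n X Xi i j = delta i j) ->
    (forall i j, (i < n)%nat -> (j < n)%nat -> mmul n Y Yi i j = delta i j) ->
    mmul n (mmul n X Y) (mmul n Yi Xi) i j = delta i j).
  { intros X Y Xi Yi i j hi hj hX hY. rewrite mmul_assoc, <- (hX i j hi hj).
    apply mmul_ext_r; intros l hl. rewrite <- mmul_assoc.
    rewrite (mmul_ext_l n _ delta); [apply mmul_delta_l; auto|]. intros; apply hY; auto. }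
  exists (mmul n S T), (mmul n Ti Si), mu. split; [|split; [|split]]; auto.
  intros i j hi hj. rewrite <- mmul_assoc, (mmul_ext_l n _ (mmul n S B)) by (intros; apply HAS; auto).
  rewrite mmul_assoc, (mmul_ext_r n S _ (fun l j => T l j * mu j)) by (intros; apply h4; auto).
  unfold mmul. rewrite <- sumn_mul_r. apply sumn_ext; intros; ring.
Qed.

Lemma diagonalizable_with_weaken n A (E E' : R -> Prop) : (forall x, E x -> E' x) ->
  diagonalizable_with n A E -> diagonalizable_with n A E'.
Proof. intros HE (T & Ti & mu & h1 & h2 & h3 & h4). exists T, Ti, mu. repeat split; auto. Qed.

Lemma sumn_unitv n v l : (l < n)%nat -> sumn n (fun L => v L * unitv L l) = v l.
Proof.
  intros H. rewrite <- (sumn_delta_r n v l H). apply sumn_ext; intros L _.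
  unfold unitv; rewrite Nat.eqb_sym; auto.
Qed.

Lemma linear_form_expand n (phi : vec -> R) :
  (forall v w, phi (fun l => v l + w l) = phi v + phi w) ->
  (forall a v, phi (fun l => a * v l) = a * phi v) ->
  (forall v w, (forall l, (l < n)%nat -> v l = w l) -> phi v = phi w) ->
  forall v, phi v = sumn n (fun L => phi (unitv L) * v L).
Proof.
  intros Hadd Hsc Hext v.
  assert (H0 : phi (fun _ => 0) = 0).
  { transitivity (phi (fun l => 0 * v l)); [apply Hext; intros; ring|]. rewrite Hsc; ring. }
  assert (Hm : forall m, phi (fun l => sumn m (fun L => v L * unitv L l))
                         = sumn m (fun L => phi (unitv L) * v L)).
  { induction m; simpl; [exact H0|].
    rewrite (Hadd (fun l => sumn m (fun L => v L * unitv L l)) (fun l => v m * unitv m l)).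
    rewrite IHm, Hsc; ring. }
  rewrite <- Hm. apply Hext. intros l hl; symmetry; apply sumn_unitv; auto.
Qed.

Definition eq3 (X Y : M3) := forall a b, (a < 3)%nat -> (b < 3)%nat -> X a b = Y a b.

Lemma sum3_ext f g : (forall i, (i < 3)%nat -> f i = g i) -> sum3 f = sum3 g.
Proof. intros H; unfold sum3; rewrite !H; auto; lia. Qed.

(** * The explicit inverse of [L] *)

Section Linverse.
Variables c1 c2 c3 : R.
Hypothesis h13 : c1 + c3 <> 1.
Hypothesis hL : 2 * (1 + c2) + (c1 + c2 + c3) <> 0.

(* [L] fixes antisymmetric matrices and maps a symmetric [S] to
   [(1 - c13) S + c123/2 tr S delta]; invert the latter on trace and trace-free parts. *)
Definition Linv_expl (X : M3) : M3 :=
  fun a b => (X a b - X b a) / 2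
    + ((X a b + X b a) / 2
       - (c1 + c2 + c3) / (2 * (1 - (c1 + c3) + 3 / 2 * (c1 + c2 + c3))) * delta a b * tr3 X)
      / (1 - (c1 + c3)).

Lemma Lmap_Linv_expl X a b : (a < 3)%nat -> (b < 3)%nat -> Lmap c1 c2 c3 (Linv_expl X) a b = X a b.
Proof.
  intros ha hb. assert (h1 : 1 - (c1 + c3) <> 0) by lra.
  assert (h2 : 1 - (c1 + c3) + 3 / 2 * (c1 + c2 + c3) <> 0) by lra.
  unfold Lmap, Linv_expl, symp, tr3, sum3, delta.
  destruct_lt3 a; destruct_lt3 b; simpl; field; solve_nonzero.
Qed.

Lemma Linv_expl_Lmap K a b : (a < 3)%nat -> (b < 3)%nat -> Linv_expl (Lmap c1 c2 c3 K) a b = K a b.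
Proof.
  intros ha hb. assert (h1 : 1 - (c1 + c3) <> 0) by lra.
  assert (h2 : 1 - (c1 + c3) + 3 / 2 * (c1 + c2 + c3) <> 0) by lra.
  unfold Lmap, Linv_expl, symp, tr3, sum3, delta.
  destruct_lt3 a; destruct_lt3 b; simpl; field; solve_nonzero.
Qed.

Lemma Linv_expl_ext X Y a b : eq3 X Y -> (a < 3)%nat -> (b < 3)%nat ->
  Linv_expl X a b = Linv_expl Y a b.
Proof.
  intros H ha hb. unfold Linv_expl, tr3, sum3.
  rewrite (H a b), (H b a), (H 0%nat 0%nat), (H 1%nat 1%nat), (H 2%nat 2%nat); auto; lia.
Qed.

Lemma Linv_expl_add X Y a b :
  Linv_expl (fun a b => X a b + Y a b) a b = Linv_expl X a b + Linv_expl Y a b.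
Proof. unfold Linv_expl, tr3, sum3, Rdiv; ring. Qed.

Lemma Linv_expl_scal al X a b : Linv_expl (fun a b => al * X a b) a b = al * Linv_expl X a b.
Proof. unfold Linv_expl, tr3, sum3, Rdiv; ring. Qed.

(* [Linv] is an arbitrary choice of a solution of [L K = X]; it agrees with [Linv_expl X]
   because [Linv_expl] is also a left inverse of [L]. *)
Lemma Linv_eq X a b : (a < 3)%nat -> (b < 3)%nat -> Linv c1 c2 c3 X a b = Linv_expl X a b.
Proof.
  intros ha hb. unfold Linv.
  set (P := fun K : M3 => forall a b, (a < 3)%nat -> (b < 3)%nat -> Lmap c1 c2 c3 K a b = X a b).
  assert (HK : P (epsilon (inhabits (fun _ _ : nat => 0)) P)).
  { apply epsilon_spec. exists (Linv_expl X). intros a' b' ha' hb'; apply Lmap_Linv_expl; auto. }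
  change (epsilon (inhabits (fun _ _ : nat => 0)) P a b = Linv_expl X a b).
  set (K := epsilon (inhabits (fun _ _ : nat => 0)) P) in *.
  rewrite <- (Linv_expl_Lmap K a b ha hb). apply Linv_expl_ext; auto.
Qed.

End Linverse.

(** * The maps [Q(k)], [R(k)], [M(k)] and [P(k)] with [L^-1] made explicit *)

Section Maps.
Variables c1 c2 c3 c4 : R.

Definition Qpre (k : nat -> R) (N : M3) (av : nat -> R) : M3 :=
  fun a b => sum3 (fun c => sum3 (fun d => eps a c d * k c * N d b))
    + k a * av b - / 2 * (c1 + c4) * delta a b * sum3 (fun c => k c * av c).

Definition Qmap_expl k N av : M3 := Linv_expl c1 c2 c3 (Qpre k N av).

Definition Mmap_expl k K : M3 :=
  Qmap_expl k (RmapN c1 c2 c3 c4 k K) (Rmapa c1 c2 c3 c4 k K).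

Definition Pmap_expl (k : nat -> R) (v : vec) : vec :=
  fun i =>
    if Nat.ltb i 9 then Qmap_expl k (Nof v) (aof v) (i / 3)%nat (i mod 3)%nat
    else if Nat.ltb i 18 then RmapN c1 c2 c3 c4 k (Kof v) ((i - 9) / 3)%nat ((i - 9) mod 3)%nat
    else Rmapa c1 c2 c3 c4 k (Kof v) (i - 18)%nat.

Lemma RmapN_add k X Y a b :
  RmapN c1 c2 c3 c4 k (fun a b => X a b + Y a b) a b
  = RmapN c1 c2 c3 c4 k X a b + RmapN c1 c2 c3 c4 k Y a b.
Proof. unfold RmapN, symp, tr3, sum3, Rdiv; ring. Qed.

Lemma RmapN_scal k al X a b :
  RmapN c1 c2 c3 c4 k (fun a b => al * X a b) a b = al * RmapN c1 c2 c3 c4 k X a b.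
Proof. unfold RmapN, symp, tr3, sum3, Rdiv; ring. Qed.

Lemma RmapN_ext k X Y a b : eq3 X Y -> (b < 3)%nat ->
  RmapN c1 c2 c3 c4 k X a b = RmapN c1 c2 c3 c4 k Y a b.
Proof. intros H hb. unfold RmapN, symp, tr3, sum3. rewrite !H by lia. auto. Qed.

Lemma Rmapa_add k X Y b :
  Rmapa c1 c2 c3 c4 k (fun a b => X a b + Y a b) b
  = Rmapa c1 c2 c3 c4 k X b + Rmapa c1 c2 c3 c4 k Y b.
Proof. unfold Rmapa, tr3, sum3, Rdiv; ring. Qed.

Lemma Rmapa_scal k al X b :
  Rmapa c1 c2 c3 c4 k (fun a b => al * X a b) b = al * Rmapa c1 c2 c3 c4 k X b.
Proof. unfold Rmapa, tr3, sum3, Rdiv; ring. Qed.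

Lemma Rmapa_ext k X Y b : eq3 X Y -> (b < 3)%nat ->
  Rmapa c1 c2 c3 c4 k X b = Rmapa c1 c2 c3 c4 k Y b.
Proof. intros H hb. unfold Rmapa, tr3, sum3. rewrite !H by lia. auto. Qed.

Lemma Qpre_ext k N N' av av' : eq3 N N' -> (forall b, (b < 3)%nat -> av b = av' b) ->
  eq3 (Qpre k N av) (Qpre k N' av').
Proof.
  intros HN Ha a b ha hb. unfold Qpre, sum3.
  rewrite (HN 0%nat b), (HN 1%nat b), (HN 2%nat b), (Ha b), (Ha 0%nat), (Ha 1%nat), (Ha 2%nat);
    auto; lia.
Qed.

Lemma Qmap_expl_ext k N N' av av' a b : eq3 N N' -> (forall b, (b < 3)%nat -> av b = av' b) ->
  (a < 3)%nat -> (b < 3)%nat -> Qmap_expl k N av a b = Qmap_expl k N' av' a b.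
Proof. intros H1 H2 ha hb. apply Linv_expl_ext; auto. apply Qpre_ext; auto. Qed.

Lemma Qmap_expl_add k N N' av av' a b : (a < 3)%nat -> (b < 3)%nat ->
  Qmap_expl k (fun a b => N a b + N' a b) (fun b => av b + av' b) a b
  = Qmap_expl k N av a b + Qmap_expl k N' av' a b.
Proof.
  intros ha hb. unfold Qmap_expl. rewrite <- Linv_expl_add. apply Linv_expl_ext; auto.
  intros x y _ _; unfold Qpre, sum3; ring.
Qed.

Lemma Qmap_expl_scal k al N av a b : (a < 3)%nat -> (b < 3)%nat ->
  Qmap_expl k (fun a b => al * N a b) (fun b => al * av b) a b = al * Qmap_expl k N av a b.
Proof.
  intros ha hb. unfold Qmap_expl. rewrite <- Linv_expl_scal. apply Linv_expl_ext; auto.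
  intros x y _ _; unfold Qpre, sum3; ring.
Qed.

Lemma Mmap_expl_ext k X Y a b : eq3 X Y -> (a < 3)%nat -> (b < 3)%nat ->
  Mmap_expl k X a b = Mmap_expl k Y a b.
Proof.
  intros H ha hb. apply Qmap_expl_ext; auto.
  - intros x y hx hy; apply RmapN_ext; auto.
  - intros x hx; apply Rmapa_ext; auto.
Qed.

Lemma Mmap_expl_add k X Y a b : (a < 3)%nat -> (b < 3)%nat ->
  Mmap_expl k (fun a b => X a b + Y a b) a b = Mmap_expl k X a b + Mmap_expl k Y a b.
Proof.
  intros ha hb. unfold Mmap_expl. rewrite <- Qmap_expl_add by auto. apply Qmap_expl_ext; auto.
  - intros x y hx hy; apply RmapN_add.
  - intros x hx; apply Rmapa_add.
Qed.

Lemma Mmap_expl_scal k al X a b : (a < 3)%nat -> (b < 3)%nat ->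
  Mmap_expl k (fun a b => al * X a b) a b = al * Mmap_expl k X a b.
Proof.
  intros ha hb. unfold Mmap_expl. rewrite <- Qmap_expl_scal by auto. apply Qmap_expl_ext; auto.
  - intros x y hx hy; apply RmapN_scal.
  - intros x hx; apply Rmapa_scal.
Qed.

Lemma div3_lt I : (I < 9)%nat -> (I / 3 < 3)%nat.
Proof. intros; apply Nat.Div0.div_lt_upper_bound; lia. Qed.

Lemma mod3_lt I : (I mod 3 < 3)%nat.
Proof. apply Nat.mod_upper_bound; lia. Qed.

Lemma Pmap_expl_linear k i v : (i < 21)%nat ->
  Pmap_expl k v i = sumn 21 (fun L => Pmap_expl k (unitv L) i * v L).
Proof.
  intros hi. apply (linear_form_expand 21 (fun v => Pmap_expl k v i)); unfold Pmap_expl.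
  - intros v1 v2. destruct (Nat.ltb_spec i 9); [|destruct (Nat.ltb_spec i 18)].
    + exact (Qmap_expl_add k (Nof v1) (Nof v2) (aof v1) (aof v2) _ _ (div3_lt i H) (mod3_lt i)).
    + exact (RmapN_add k (Kof v1) (Kof v2) _ _).
    + exact (Rmapa_add k (Kof v1) (Kof v2) _).
  - intros al v1. destruct (Nat.ltb_spec i 9); [|destruct (Nat.ltb_spec i 18)].
    + exact (Qmap_expl_scal k al (Nof v1) (aof v1) _ _ (div3_lt i H) (mod3_lt i)).
    + exact (RmapN_scal k al (Kof v1) _ _).
    + exact (Rmapa_scal k al (Kof v1) _).
  - intros v1 v2 Hv.
    assert (HK : eq3 (Kof v1) (Kof v2)) by (intros x y hx hy; unfold Kof; apply Hv; lia).
    destruct (Nat.ltb_spec i 9); [|destruct (Nat.ltb_spec i 18)].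
    + apply Qmap_expl_ext; try apply div3_lt; try apply mod3_lt; auto.
      * intros x y hx hy; unfold Nof; apply Hv; lia.
      * intros x hx; unfold aof; apply Hv; lia.
    + apply RmapN_ext; auto. apply mod3_lt.
    + apply Rmapa_ext; auto. lia.
Qed.

Section Invertible.
Hypothesis h13 : c1 + c3 <> 1.
Hypothesis hL : 2 * (1 + c2) + (c1 + c2 + c3) <> 0.

Lemma Qmap_eq k N av a b : (a < 3)%nat -> (b < 3)%nat ->
  Qmap c1 c2 c3 c4 k N av a b = Qmap_expl k N av a b.
Proof. intros ha hb. unfold Qmap, Qmap_expl. rewrite Linv_eq; auto. Qed.

Lemma Mmap_eq k K a b : (a < 3)%nat -> (b < 3)%nat ->
  Mmap c1 c2 c3 c4 k K a b = Mmap_expl k K a b.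
Proof. intros ha hb. apply Qmap_eq; auto. Qed.

Lemma Pmap_eq k v i : Pmap c1 c2 c3 c4 k v i = Pmap_expl k v i.
Proof.
  unfold Pmap, Pmap_expl. destruct (Nat.ltb_spec i 9); auto.
  apply Qmap_eq; [apply div3_lt; auto | apply mod3_lt].
Qed.

Lemma Mmat_eq_P2 k i j : (i < 9)%nat -> (j < 9)%nat ->
  Mmat c1 c2 c3 c4 k i j = mmul 21 (Pmat c1 c2 c3 c4 k) (Pmat c1 c2 c3 c4 k) i j.
Proof.
  intros hi hj. unfold mmul.
  rewrite (sumn_ext 21 _ (fun L => Pmap_expl k (unitv L) i * Pmap_expl k (unitv j) L))
    by (intros; unfold Pmat; rewrite !Pmap_eq; auto).
  rewrite <- Pmap_expl_linear by lia. unfold Mmat.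
  rewrite Mmap_eq by (auto using mod3_lt, div3_lt).
  unfold Pmap_expl at 1. rewrite (proj2 (Nat.ltb_lt i 9)) by auto.
  apply Qmap_expl_ext; auto using mod3_lt, div3_lt.
  - intros a b ha hb. unfold Nof, Pmap_expl. destruct_lt3 a; destruct_lt3 b; simpl; auto.
  - intros b hb. unfold aof, Pmap_expl. destruct_lt3 b; simpl; auto.
Qed.

End Invertible.
End Maps.

(** * Rotating [k] to the north pole *)

Definition rotM (F : mat) (K : M3) : M3 :=
  fun a b => sum3 (fun i => sum3 (fun j => F a i * K i j * F b j)).
Definition rotv (F : mat) (w : nat -> R) : nat -> R := fun a => sum3 (fun i => F a i * w i).
Definition e3 : nat -> R := kvec 0 0 1.

(* The last two fields say that [F] is a rotation rather than a reflection: they are the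
   cofactor identities [det F = 1] provides for the Levi-Civita symbol. *)
Record frame (F : mat) (k : nat -> R) : Prop := {
  frame_rows : forall a b, (a < 3)%nat -> (b < 3)%nat -> sum3 (fun j => F a j * F b j) = delta a b;
  frame_cols : forall i j, (i < 3)%nat -> (j < 3)%nat -> sum3 (fun a => F a i * F a j) = delta i j;
  frame_k : forall a, (a < 3)%nat -> k a = F a 2%nat;
  frame_eps : forall a b m, (a < 3)%nat -> (b < 3)%nat -> (m < 3)%nat ->
    sum3 (fun c => eps a b c * F c m) = sum3 (fun i => sum3 (fun j => F a i * F b j * eps i j m));
  frame_eps2 : forall a m i, (a < 3)%nat -> (m < 3)%nat -> (i < 3)%nat ->
    sum3 (fun c => sum3 (fun d => eps a c d * F c m * F d i)) = sum3 (fun l => eps l m i * F a l)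
}.

Ltac expand3 := unfold tr3, rotM, rotv, symp, e3, kvec; unfold sum3; simpl; first [ring | field].

Section Frame.
Variables (F : mat) (k : nat -> R).
Hypothesis HF : frame F k.

Lemma sum3_k_frame (f : R -> nat -> R) : sum3 (fun c => f (k c) c) = sum3 (fun c => f (F c 2%nat) c).
Proof. apply sum3_ext; intros c Hc; rewrite (frame_k _ _ HF c Hc); auto. Qed.

Lemma tr3_rotM K : tr3 (rotM F K) = tr3 K.
Proof.
  transitivity (sum3 (fun i => sum3 (fun j => K i j * sum3 (fun a => F a i * F a j)))); [expand3|].
  transitivity (sum3 (fun i => sum3 (fun j => K i j * delta i j))).
  { apply sum3_ext; intros i hi; apply sum3_ext; intros j hj. rewrite (frame_cols _ _ HF); auto. }
  unfold delta; expand3.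
Qed.

Lemma rotM_delta a b : (a < 3)%nat -> (b < 3)%nat -> delta a b = rotM F delta a b.
Proof. intros ha hb. rewrite <- (frame_rows _ _ HF); auto. unfold delta; expand3. Qed.

Lemma rotv_e3 b : (b < 3)%nat -> k b = rotv F e3 b.
Proof. intros hb. rewrite (frame_k _ _ HF); auto. expand3. Qed.

Lemma eps_k_rotM K a b : (a < 3)%nat -> (b < 3)%nat ->
  sum3 (fun c => sum3 (fun d => eps a c d * k c * rotM F K d b))
  = rotM F (fun i j => sum3 (fun c => sum3 (fun d => eps i c d * e3 c * K d j))) a b.
Proof.
  intros ha hb. rewrite (sum3_k_frame (fun kc c => sum3 (fun d => eps a c d * kc * rotM F K d b))).
  transitivity (sum3 (fun i => sum3 (fun j =>
     sum3 (fun c => sum3 (fun d => eps a c d * F c 2%nat * F d i)) * K i j * F b j))); [expand3|].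
  transitivity (sum3 (fun i => sum3 (fun j => sum3 (fun l => eps l 2 i * F a l) * K i j * F b j))).
  { apply sum3_ext; intros i hi; apply sum3_ext; intros j hj. rewrite (frame_eps2 _ _ HF); auto. }
  expand3.
Qed.

Lemma eps_k_symp_rotM K a b : (a < 3)%nat -> (b < 3)%nat ->
  sum3 (fun c => sum3 (fun d => eps a b c * k d * symp (rotM F K) c d))
  = rotM F (fun i j => sum3 (fun c => sum3 (fun d => eps i j c * e3 d * symp K c d))) a b.
Proof.
  intros ha hb.
  transitivity (sum3 (fun c => sum3 (fun d => eps a b c * F d 2%nat * symp (rotM F K) c d))).
  { apply sum3_ext; intros c hc; apply sum3_ext; intros d hd; rewrite (frame_k _ _ HF); auto. }
  transitivity (sum3 (fun c => eps a b c * sum3 (fun i => sum3 (fun j =>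
      F c i * ((K i j + K j i) / 2) * sum3 (fun d => F d 2%nat * F d j))))); [expand3|].
  transitivity (sum3 (fun c => eps a b c * sum3 (fun i => sum3 (fun j =>
      F c i * ((K i j + K j i) / 2) * delta 2 j)))).
  { apply sum3_ext; intros c hc; f_equal. apply sum3_ext; intros i hi; apply sum3_ext; intros j hj.
    rewrite (frame_cols _ _ HF); auto. }
  transitivity (sum3 (fun m => sum3 (fun c => eps a b c * F c m) * ((K m 2%nat + K 2%nat m) / 2))).
  { unfold delta; expand3. }
  transitivity (sum3 (fun m => sum3 (fun i => sum3 (fun j => F a i * F b j * eps i j m))
                               * ((K m 2%nat + K 2%nat m) / 2))).
  { apply sum3_ext; intros m hm. rewrite (frame_eps _ _ HF); auto. }
  expand3.
Qed.

Lemma eps_k_rotM_e3 a b : (a < 3)%nat -> (b < 3)%nat ->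
  sum3 (fun c => eps a b c * k c) = rotM F (fun i j => sum3 (fun c => eps i j c * e3 c)) a b.
Proof.
  intros ha hb. rewrite (sum3_k_frame (fun kc c => eps a b c * kc)), (frame_eps _ _ HF); auto.
  expand3.
Qed.

Lemma k_contract_rotM_l K b : (b < 3)%nat ->
  sum3 (fun a => k a * rotM F K a b) = rotv F (fun j => sum3 (fun i => e3 i * K i j)) b.
Proof.
  intros hb. rewrite (sum3_k_frame (fun ka a => ka * rotM F K a b)).
  transitivity (sum3 (fun i => sum3 (fun j => sum3 (fun a => F a 2%nat * F a i) * K i j * F b j)));
    [expand3|].
  transitivity (sum3 (fun i => sum3 (fun j => delta 2 i * K i j * F b j))).
  { apply sum3_ext; intros i hi; apply sum3_ext; intros j hj. rewrite (frame_cols _ _ HF); auto. }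
  unfold delta; expand3.
Qed.

Lemma k_contract_rotM_r K b : (b < 3)%nat ->
  sum3 (fun a => k a * rotM F K b a) = rotv F (fun j => sum3 (fun i => e3 i * K j i)) b.
Proof.
  intros hb. rewrite (sum3_k_frame (fun ka a => ka * rotM F K b a)).
  transitivity (sum3 (fun i => sum3 (fun j => sum3 (fun a => F a 2%nat * F a j) * K i j * F b i)));
    [expand3|].
  transitivity (sum3 (fun i => sum3 (fun j => delta 2 j * K i j * F b i))).
  { apply sum3_ext; intros i hi; apply sum3_ext; intros j hj. rewrite (frame_cols _ _ HF); auto. }
  unfold delta; expand3.
Qed.

Lemma k_outer_rotv av a b : (a < 3)%nat -> (b < 3)%nat ->
  k a * rotv F av b = rotM F (fun i j => e3 i * av j) a b.
Proof. intros ha hb. rewrite (frame_k _ _ HF); auto. expand3. Qed.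

Lemma k_dot_rotv av : sum3 (fun c => k c * rotv F av c) = sum3 (fun c => e3 c * av c).
Proof.
  rewrite (sum3_k_frame (fun kc c => kc * rotv F av c)).
  transitivity (sum3 (fun j => sum3 (fun c => F c 2%nat * F c j) * av j)); [expand3|].
  transitivity (sum3 (fun j => delta 2 j * av j)).
  { apply sum3_ext; intros j hj. rewrite (frame_cols _ _ HF); auto. }
  unfold delta; expand3.
Qed.

End Frame.

Section Equivariance.
Variables c1 c2 c3 c4 : R.
Hypothesis h13 : c1 + c3 <> 1.
Hypothesis h14 : c1 + c4 <> 0.
Hypothesis hL : 2 * (1 + c2) + (c1 + c2 + c3) <> 0.
Variables (F : mat) (k : nat -> R).
Hypothesis HF : frame F k.

Lemma Linv_expl_rotM X a b : (a < 3)%nat -> (b < 3)%nat ->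
  Linv_expl c1 c2 c3 (rotM F X) a b = rotM F (Linv_expl c1 c2 c3 X) a b.
Proof.
  intros ha hb. assert (h1 : 1 - (c1 + c3) <> 0) by lra.
  assert (h2 : 1 - (c1 + c3) + 3 / 2 * (c1 + c2 + c3) <> 0) by lra.
  unfold Linv_expl at 1. rewrite (tr3_rotM F k HF X), (rotM_delta F k HF a b ha hb).
  unfold Linv_expl, tr3, rotM, delta; unfold sum3; simpl. field; solve_nonzero.
Qed.

Lemma RmapN_rotM K a b : (a < 3)%nat -> (b < 3)%nat ->
  RmapN c1 c2 c3 c4 k (rotM F K) a b = rotM F (RmapN c1 c2 c3 c4 e3 K) a b.
Proof.
  intros ha hb. unfold RmapN at 1.
  rewrite (eps_k_rotM F k HF K a b ha hb), (eps_k_symp_rotM F k HF K a b ha hb),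
    (eps_k_rotM_e3 F k HF a b ha hb), (tr3_rotM F k HF K).
  unfold RmapN. expand3.
Qed.

Lemma Rmapa_rotM K b : (b < 3)%nat ->
  Rmapa c1 c2 c3 c4 k (rotM F K) b = rotv F (Rmapa c1 c2 c3 c4 e3 K) b.
Proof.
  intros hb. unfold Rmapa at 1.
  rewrite (k_contract_rotM_l F k HF K b hb), (k_contract_rotM_r F k HF K b hb),
    (rotv_e3 F k HF b hb), (tr3_rotM F k HF K).
  unfold Rmapa, tr3, rotM, rotv, e3, kvec; unfold sum3; simpl. field; auto.
Qed.

Lemma Qpre_rotM N av a b : (a < 3)%nat -> (b < 3)%nat ->
  Qpre c1 c4 k (rotM F N) (rotv F av) a b = rotM F (Qpre c1 c4 e3 N av) a b.
Proof.
  intros ha hb. unfold Qpre at 1.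
  rewrite (eps_k_rotM F k HF N a b ha hb), (k_outer_rotv F k HF av a b ha hb),
    (k_dot_rotv F k HF av), (rotM_delta F k HF a b ha hb).
  unfold Qpre, delta. expand3.
Qed.

Lemma Qmap_expl_rotM N av a b : (a < 3)%nat -> (b < 3)%nat ->
  Qmap_expl c1 c2 c3 c4 k (rotM F N) (rotv F av) a b = rotM F (Qmap_expl c1 c2 c3 c4 e3 N av) a b.
Proof.
  intros ha hb. unfold Qmap_expl.
  rewrite (Linv_expl_ext c1 c2 c3 _ (rotM F (Qpre c1 c4 e3 N av))), Linv_expl_rotM; auto.
  intros a' b' ha' hb'. apply Qpre_rotM; auto.
Qed.

Lemma Mmap_expl_rotM K a b : (a < 3)%nat -> (b < 3)%nat ->
  Mmap_expl c1 c2 c3 c4 k (rotM F K) a b = rotM F (Mmap_expl c1 c2 c3 c4 e3 K) a b.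
Proof.
  intros ha hb. unfold Mmap_expl. rewrite <- Qmap_expl_rotM by auto.
  apply Qmap_expl_ext; auto.
  - intros x y hx hy; apply RmapN_rotM; auto.
  - intros x hx; apply Rmapa_rotM; auto.
Qed.

End Equivariance.

(* Coordinate matrices of [K |-> F K F^T] on [V] and of its extension to [V (+) W]. *)
Definition rotV (F : mat) : mat :=
  fun I J => F (I / 3)%nat (J / 3)%nat * F (I mod 3)%nat (J mod 3)%nat.

Definition rotVW (F : mat) : mat := fun I J =>
  if (I <? 9)%nat then (if (J <? 9)%nat then rotV F I J else 0)
  else if (I <? 18)%nat then
    (if (J <? 9)%nat then 0 else if (J <? 18)%nat then rotV F (I - 9)%nat (J - 9)%nat else 0)
  else (if (J <? 18)%nat then 0 else F (I - 18)%nat (J - 18)%nat).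

Lemma divmod3 I : I = (3 * (I / 3) + I mod 3)%nat.
Proof. apply Nat.div_mod; lia. Qed.

Lemma delta_divmod3 I J :
  delta (I / 3)%nat (J / 3)%nat * delta (I mod 3)%nat (J mod 3)%nat = delta I J.
Proof.
  destruct (Nat.eq_dec I J) as [->|hne]; [rewrite !delta_diag; ring|].
  rewrite (delta_neq I J hne). destruct (Nat.eq_dec (I / 3) (J / 3)) as [e1|n1].
  - rewrite (delta_neq (I mod 3)); [ring|]. intros e2. apply hne.
    rewrite (divmod3 I), (divmod3 J), e1, e2; auto.
  - rewrite delta_neq; auto; ring.
Qed.

Section Orthogonal.
Variable F : mat.
Hypothesis HF : forall a b, (a < 3)%nat -> (b < 3)%nat -> sum3 (fun j => F a j * F b j) = delta a b.

Lemma rotV_orthogonal I J : (I < 9)%nat -> (J < 9)%nat ->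
  mmul 9 (rotV F) (transp (rotV F)) I J = delta I J.
Proof.
  intros hI hJ. rewrite <- delta_divmod3.
  rewrite <- (HF (I / 3)%nat (J / 3)%nat), <- (HF (I mod 3)%nat (J mod 3)%nat)
    by auto using div3_lt, mod3_lt.
  unfold mmul, rotV, transp; simpl; unfold sum3; ring.
Qed.

Lemma rotVW_orthogonal I J : (I < 21)%nat -> (J < 21)%nat ->
  mmul 21 (rotVW F) (transp (rotVW F)) I J = delta I J.
Proof.
  intros hI hJ.
  assert (HI : (I < 9 \/ 9 <= I < 18 \/ 18 <= I)%nat) by lia.
  assert (HJ : (J < 9 \/ 9 <= J < 18 \/ 18 <= J)%nat) by lia.
  destruct HI as [a|[a|a]]; destruct HJ as [b|[b|b]];
    try (rewrite delta_neq by lia; unfold mmul, transp, rotVW; simpl; simpl_ltb; ring);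
    unfold mmul, transp, rotVW; simpl; simpl_ltb.
  - rewrite <- (rotV_orthogonal I J) by lia. unfold mmul, rotV, transp; simpl; ring.
  - rewrite (delta_sub 9 I J), <- (rotV_orthogonal (I - 9) (J - 9)) by lia.
    unfold mmul, rotV, transp; simpl; ring.
  - rewrite (delta_sub 18 I J), <- (HF (I - 18)%nat (J - 18)%nat) by lia. unfold sum3; ring.
Qed.

End Orthogonal.

Lemma rotVW_transp F I J : (I < 21)%nat -> (J < 21)%nat -> rotVW (transp F) I J = rotVW F J I.
Proof.
  intros hI hJ. unfold rotVW.
  destruct (Nat.ltb_spec I 9); destruct (Nat.ltb_spec J 9); try destruct (Nat.ltb_spec I 18);
    try destruct (Nat.ltb_spec J 18); auto; lia.
Qed.

Section FrameCoordinates.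
Variables (F : mat) (k : nat -> R).
Hypothesis HF : frame F k.

Lemma rotV_inv_r I J : (I < 9)%nat -> (J < 9)%nat ->
  mmul 9 (rotV F) (transp (rotV F)) I J = delta I J.
Proof. apply rotV_orthogonal, (frame_rows _ _ HF). Qed.

Lemma rotV_inv_l I J : (I < 9)%nat -> (J < 9)%nat ->
  mmul 9 (transp (rotV F)) (rotV F) I J = delta I J.
Proof.
  intros hI hJ. change (mmul 9 (rotV (transp F)) (transp (rotV (transp F))) I J = delta I J).
  apply rotV_orthogonal; auto. exact (frame_cols _ _ HF).
Qed.

Lemma rotVW_inv_r I J : (I < 21)%nat -> (J < 21)%nat ->
  mmul 21 (rotVW F) (transp (rotVW F)) I J = delta I J.
Proof. apply rotVW_orthogonal, (frame_rows _ _ HF). Qed.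

Lemma rotVW_inv_l I J : (I < 21)%nat -> (J < 21)%nat ->
  mmul 21 (transp (rotVW F)) (rotVW F) I J = delta I J.
Proof.
  intros hI hJ. rewrite <- (rotVW_orthogonal (transp F) (frame_cols _ _ HF) I J hI hJ).
  apply sumn_ext; intros L hL.
  change (transp (rotVW (transp F)) L J) with (rotVW (transp F) J L).
  rewrite !rotVW_transp; auto.
Qed.

End FrameCoordinates.

Lemma sumn_rotV F X I :
  sumn 9 (fun L => rotV F I L * X (L / 3)%nat (L mod 3)%nat) = rotM F X (I / 3)%nat (I mod 3)%nat.
Proof. unfold rotV, rotM; simpl; unfold sum3; ring. Qed.

Lemma Kof_rotV_col F J : (J < 9)%nat -> eq3 (Kof (fun L => rotV F L J)) (rotM F (Kof (unitv J))).
Proof.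
  intros hJ a b ha hb. unfold Kof, rotV, rotM, unitv.
  do 9 (destruct J as [|J]; [destruct_lt3 a; destruct_lt3 b; simpl; unfold sum3; simpl; ring|]).
  lia.
Qed.

Definition rotVWv (F : mat) (v : vec) : vec := fun l => sumn 21 (fun L => rotVW F l L * v L).

Lemma Kof_rotVWv F v : eq3 (Kof (rotVWv F v)) (rotM F (Kof v)).
Proof.
  intros a b ha hb. destruct_lt3 a; destruct_lt3 b;
    unfold Kof, rotVWv, rotVW, rotV, rotM; unfold sum3; simpl; ring.
Qed.

Lemma Nof_rotVWv F v : eq3 (Nof (rotVWv F v)) (rotM F (Nof v)).
Proof.
  intros a b ha hb. destruct_lt3 a; destruct_lt3 b;
    unfold Nof, rotVWv, rotVW, rotV, rotM; unfold sum3; simpl; ring.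
Qed.

Lemma aof_rotVWv F v b : (b < 3)%nat -> aof (rotVWv F v) b = rotv F (aof v) b.
Proof. intros hb. destruct_lt3 b; unfold aof, rotVWv, rotVW, rotv; unfold sum3; simpl; ring. Qed.

Lemma rotVWv_V F v I : (I < 9)%nat -> rotVWv F v I = sumn 9 (fun L => rotV F I L * v L).
Proof.
  intros hI. unfold rotVWv. rewrite (sumn_split 9 12), (sumn_eq0 12).
  - rewrite Rplus_0_r. apply sumn_ext; intros L hL. unfold rotVW; simpl_ltb. auto.
  - intros L hL. unfold rotVW; simpl_ltb. ring.
Qed.

Lemma rotVWv_N F v I : (9 <= I < 18)%nat ->
  rotVWv F v I = sumn 9 (fun L => rotV F (I - 9)%nat L * v (9 + L)%nat).
Proof.
  intros hI. unfold rotVWv. rewrite (sumn_split 9 12), (sumn_eq0 9), (sumn_split 9 3), (sumn_eq0 3).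
  - rewrite !Rplus_0_l, Rplus_0_r. apply sumn_ext; intros L hL.
    unfold rotVW; simpl_ltb. do 2 f_equal. lia.
  - intros L hL. unfold rotVW; simpl_ltb. ring.
  - intros L hL. unfold rotVW; simpl_ltb. ring.
Qed.

Lemma rotVWv_a F v I : (18 <= I)%nat ->
  rotVWv F v I = sum3 (fun L => F (I - 18)%nat L * v (18 + L)%nat).
Proof.
  intros hI. unfold rotVWv. rewrite (sumn_split 18 3), (sumn_eq0 18).
  - rewrite Rplus_0_l. unfold sum3; simpl. unfold rotVW; simpl_ltb. simpl. ring.
  - intros L hL. unfold rotVW; simpl_ltb. ring.
Qed.

Section ConjugateToNorth.
Variables c1 c2 c3 c4 : R.
Hypothesis h13 : c1 + c3 <> 1.
Hypothesis h14 : c1 + c4 <> 0.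
Hypothesis hL : 2 * (1 + c2) + (c1 + c2 + c3) <> 0.
Variables (F : mat) (k : nat -> R).
Hypothesis HF : frame F k.

Lemma Mmat_rotV I J : (I < 9)%nat -> (J < 9)%nat ->
  mmul 9 (Mmat c1 c2 c3 c4 k) (rotV F) I J = mmul 9 (rotV F) (Mmat c1 c2 c3 c4 e3) I J.
Proof.
  intros hI hJ. pose proof (div3_lt I hI) as ha. pose proof (mod3_lt I) as hb. unfold mmul, Mmat.
  transitivity (sumn 9 (fun L =>
    Mmap_expl c1 c2 c3 c4 k (Kof (unitv L)) (I / 3)%nat (I mod 3)%nat * rotV F L J)).
  { apply sumn_ext; intros; rewrite Mmap_eq; auto. }
  rewrite <- (linear_form_expand 9 (fun v => Mmap_expl c1 c2 c3 c4 k (Kof v) (I / 3)%nat (I mod 3)%nat)).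
  - rewrite (Mmap_expl_ext c1 c2 c3 c4 k _ (rotM F (Kof (unitv J)))) by auto using Kof_rotV_col.
    rewrite (Mmap_expl_rotM c1 c2 c3 c4 h13 h14 hL F k HF) by auto. rewrite <- sumn_rotV.
    apply sumn_ext; intros L hL'. rewrite Mmap_eq; auto using div3_lt, mod3_lt.
  - intros v w. exact (Mmap_expl_add c1 c2 c3 c4 k (Kof v) (Kof w) _ _ ha hb).
  - intros al v. exact (Mmap_expl_scal c1 c2 c3 c4 k al (Kof v) _ _ ha hb).
  - intros v w Hvw. apply Mmap_expl_ext; auto. intros x y hx hy; unfold Kof; apply Hvw; lia.
Qed.

Lemma Pmap_expl_rotVWv v I : (I < 21)%nat ->
  Pmap_expl c1 c2 c3 c4 k (rotVWv F v) I = rotVWv F (Pmap_expl c1 c2 c3 c4 e3 v) I.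
Proof.
  intros hI. unfold Pmap_expl at 1.
  destruct (Nat.ltb_spec I 9); [|destruct (Nat.ltb_spec I 18)].
  - rewrite (Qmap_expl_ext c1 c2 c3 c4 k _ (rotM F (Nof v)) _ (rotv F (aof v)))
      by auto using div3_lt, mod3_lt, Nof_rotVWv, aof_rotVWv.
    rewrite (Qmap_expl_rotM c1 c2 c3 c4 h13 hL F k HF) by auto using div3_lt, mod3_lt.
    rewrite rotVWv_V, <- sumn_rotV by auto. apply sumn_ext; intros L hL'.
    unfold Pmap_expl; simpl_ltb; auto.
  - rewrite (RmapN_ext c1 c2 c3 c4 k _ (rotM F (Kof v))) by auto using Kof_rotVWv, mod3_lt.
    rewrite RmapN_rotM by (auto using mod3_lt; apply div3_lt; lia).
    rewrite rotVWv_N, <- sumn_rotV by lia. apply sumn_ext; intros L hL'.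
    unfold Pmap_expl; simpl_ltb. replace (9 + L - 9)%nat with L by lia. auto.
  - rewrite (Rmapa_ext c1 c2 c3 c4 k _ (rotM F (Kof v))) by (auto using Kof_rotVWv; lia).
    rewrite (Rmapa_rotM c1 c2 c3 c4 h14 F k HF), rotVWv_a by lia.
    unfold rotv, sum3, Pmap_expl; simpl_ltb. repeat f_equal; lia.
Qed.

Lemma Pmat_rotVW I J : (I < 21)%nat -> (J < 21)%nat ->
  mmul 21 (Pmat c1 c2 c3 c4 k) (rotVW F) I J = mmul 21 (rotVW F) (Pmat c1 c2 c3 c4 e3) I J.
Proof.
  intros hI hJ. unfold mmul, Pmat.
  transitivity (sumn 21 (fun L => Pmap_expl c1 c2 c3 c4 k (unitv L) I * rotVW F L J)).
  { apply sumn_ext; intros; rewrite Pmap_eq; auto. }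
  rewrite <- Pmap_expl_linear by auto.
  transitivity (Pmap_expl c1 c2 c3 c4 k (rotVWv F (unitv J)) I).
  { assert (Hcol : forall L, (L < 21)%nat -> rotVW F L J = rotVWv F (unitv J) L).
    { intros L hL'. unfold rotVWv. symmetry. apply (sumn_delta_r 21 (fun M => rotVW F L M)); auto. }
    unfold Pmap_expl. destruct (Nat.ltb_spec I 9); [|destruct (Nat.ltb_spec I 18)].
    - apply Qmap_expl_ext; auto using div3_lt, mod3_lt.
      + intros x y hx hy; unfold Nof; apply Hcol; lia.
      + intros x hx; unfold aof; apply Hcol; lia.
    - apply RmapN_ext; auto using mod3_lt. intros x y hx hy; unfold Kof; apply Hcol; lia.
    - apply Rmapa_ext; [|lia]. intros x y hx hy; unfold Kof; apply Hcol; lia. }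
  rewrite Pmap_expl_rotVWv by auto. unfold rotVWv. apply sumn_ext; intros L hL'.
  rewrite Pmap_eq; auto.
Qed.

End ConjugateToNorth.

(* Rotation matrix whose third column is the inverse stereographic projection of [(u, v)]
   from the south pole. *)
Definition stereo_frame (u v : R) : mat := fun a b =>
  let D := 1 + u * u + v * v in
  match a, b with
  | 0%nat, 0%nat => 1 - 2 * u * u / D | 0%nat, 1%nat => - 2 * u * v / D | 0%nat, 2%nat => 2 * u / D
  | 1%nat, 0%nat => - 2 * u * v / D | 1%nat, 1%nat => 1 - 2 * v * v / D | 1%nat, 2%nat => 2 * v / D
  | 2%nat, 0%nat => - 2 * u / D | 2%nat, 1%nat => - 2 * v / D | 2%nat, 2%nat => (1 - u * u - v * v) / D
  | _, _ => 0 end.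

Definition south_frame : mat := fun a b =>
  match a, b with
  | 0%nat, 0%nat => 1 | 1%nat, 1%nat => -1 | 2%nat, 2%nat => -1 | _, _ => 0 end.

Lemma stereo_frame_frame u v : frame (stereo_frame u v) (fun a => stereo_frame u v a 2%nat).
Proof.
  assert (hD : 1 + u * u + v * v <> 0) by nra.
  split.
  - intros a b ha hb. destruct_lt3 a; destruct_lt3 b; unfold stereo_frame, sum3, delta; simpl; field; auto.
  - intros a b ha hb. destruct_lt3 a; destruct_lt3 b; unfold stereo_frame, sum3, delta; simpl; field; auto.
  - auto.
  - intros a b m ha hb hm. destruct_lt3 a; destruct_lt3 b; destruct_lt3 m;
      unfold stereo_frame, sum3; simpl; field; auto.
  - intros a b m ha hb hm. destruct_lt3 a; destruct_lt3 b; destruct_lt3 m;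
      unfold stereo_frame, sum3; simpl; field; auto.
Qed.

Lemma south_frame_frame : frame south_frame (fun a => south_frame a 2%nat).
Proof.
  split.
  - intros a b ha hb. destruct_lt3 a; destruct_lt3 b; unfold south_frame, sum3, delta; simpl; ring.
  - intros a b ha hb. destruct_lt3 a; destruct_lt3 b; unfold south_frame, sum3, delta; simpl; ring.
  - auto.
  - intros a b m ha hb hm. destruct_lt3 a; destruct_lt3 b; destruct_lt3 m;
      unfold south_frame, sum3; simpl; ring.
  - intros a b m ha hb hm. destruct_lt3 a; destruct_lt3 b; destruct_lt3 m;
      unfold south_frame, sum3; simpl; ring.
Qed.

Lemma frame_ext F k k' : frame F k -> (forall a, (a < 3)%nat -> k' a = k a) -> frame F k'.
Proof.
  intros [h1 h2 h3 h4 h5] H. split; auto. intros a ha; rewrite H; auto.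
Qed.

Lemma sphere_frame x y z : x ^ 2 + y ^ 2 + z ^ 2 = 1 -> exists F, frame F (kvec x y z).
Proof.
  intros hs. destruct (Req_dec z (-1)) as [hz|hz].
  - assert (x = 0) by nra. assert (y = 0) by nra. subst.
    exists south_frame. apply (frame_ext _ _ _ south_frame_frame).
    intros a ha; destruct_lt3 a; unfold south_frame, kvec; simpl; ring.
  - assert (hz' : 1 + z <> 0) by lra.
    exists (stereo_frame (x / (1 + z)) (y / (1 + z))). apply (frame_ext _ _ _ (stereo_frame_frame _ _)).
    assert (HD : 1 + x / (1 + z) * (x / (1 + z)) + y / (1 + z) * (y / (1 + z)) = 2 / (1 + z)).
    { replace (1 + x / (1 + z) * (x / (1 + z)) + y / (1 + z) * (y / (1 + z)))
        with (1 + (x * x + y * y) / ((1 + z) * (1 + z))) by (field; auto).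
      replace (x * x + y * y) with ((1 - z) * (1 + z)) by nra. field; auto. }
    intros a ha; destruct_lt3 a; unfold stereo_frame, kvec; simpl.
    + rewrite HD; field; auto.
    + rewrite HD; field; auto.
    + replace (1 - x / (1 + z) * (x / (1 + z)) - y / (1 + z) * (y / (1 + z)))
        with (2 - (1 + x / (1 + z) * (x / (1 + z)) + y / (1 + z) * (y / (1 + z)))) by ring.
      rewrite HD; field; auto.
Qed.

(** * The spectrum of [M] at the north pole *)

Lemma diagonalize_2x2 b11 b12 b21 b22 l1 l2 :
  l1 <> l2 -> b11 + b22 = l1 + l2 -> b11 * b22 - b12 * b21 = l1 * l2 ->
  exists t11 t12 t21 t22 s11 s12 s21 s22 : R,
    b11 * t11 + b12 * t21 = t11 * l1 /\ b21 * t11 + b22 * t21 = t21 * l1 /\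
    b11 * t12 + b12 * t22 = t12 * l2 /\ b21 * t12 + b22 * t22 = t22 * l2 /\
    t11 * s11 + t12 * s21 = 1 /\ t11 * s12 + t12 * s22 = 0 /\
    t21 * s11 + t22 * s21 = 0 /\ t21 * s12 + t22 * s22 = 1 /\
    s11 * t11 + s12 * t21 = 1 /\ s11 * t12 + s12 * t22 = 0 /\
    s21 * t11 + s22 * t21 = 0 /\ s21 * t12 + s22 * t22 = 1.
Proof.
  intros hl htr hdet. assert (hl' : l2 - l1 <> 0) by lra. assert (hl'' : l1 - l2 <> 0) by lra.
  destruct (Req_dec b12 0) as [hb|hb].
  - subst b12. assert (hb2 : (b11 - l1) * (b11 - l2) = 0) by nra.
    destruct (Rmult_integral _ _ hb2) as [e|e].
    + replace b11 with l1 by lra. replace b22 with l2 by lra.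
      exists (l1 - l2), 0, b21, 1, (/ (l1 - l2)), 0, (- b21 / (l1 - l2)), 1.
      repeat split; field; auto.
    + replace b11 with l2 by lra. replace b22 with l1 by lra.
      exists 0, (l2 - l1), 1, b21, (- b21 / (l2 - l1)), 1, (/ (l2 - l1)), 0.
      repeat split; field; auto.
  - (* the eigenvectors are [(b12, l - b11)] *)
    exists b12, b12, (l1 - b11), (l2 - b11),
      ((l2 - b11) / (b12 * (l2 - l1))), (- b12 / (b12 * (l2 - l1))),
      (- (l1 - b11) / (b12 * (l2 - l1))), (b12 / (b12 * (l2 - l1))).
    assert (hb21 : b12 * b21 = b11 * b22 - l1 * l2) by lra.
    assert (hb22 : b22 = l1 + l2 - b11) by lra.
    repeat split; try (field; split; auto); rewrite hb22; nra.
Qed.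

Definition block9 (s11 s12 s21 s22 v11 v12 v21 v22 d6 d7 d8 : R) : mat := fun I J =>
  match I, J with
  | 0%nat, 0%nat => s11 | 0%nat, 1%nat => s12 | 1%nat, 0%nat => s21 | 1%nat, 1%nat => s22
  | 2%nat, 2%nat => v11 | 2%nat, 3%nat => v12 | 3%nat, 2%nat => v21 | 3%nat, 3%nat => v22
  | 4%nat, 4%nat => v11 | 4%nat, 5%nat => v12 | 5%nat, 4%nat => v21 | 5%nat, 5%nat => v22
  | 6%nat, 6%nat => d6 | 7%nat, 7%nat => d7 | 8%nat, 8%nat => d8
  | _, _ => 0 end.

Lemma block9_diagonalizable (E : R -> Prop) b11 b12 b21 b22 l1 l2 v11 v12 v21 v22 m1 m2 d6 d7 d8 :
  l1 <> l2 -> b11 + b22 = l1 + l2 -> b11 * b22 - b12 * b21 = l1 * l2 ->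
  m1 <> m2 -> v11 + v22 = m1 + m2 -> v11 * v22 - v12 * v21 = m1 * m2 ->
  E l1 -> E l2 -> E m1 -> E m2 -> E d6 -> E d7 -> E d8 ->
  diagonalizable_with 9 (block9 b11 b12 b21 b22 v11 v12 v21 v22 d6 d7 d8) E.
Proof.
  intros hl1 hl2 hl3 hm1 hm2 hm3 p1 p2 p3 p4 p6 p7 p8.
  destruct (diagonalize_2x2 _ _ _ _ _ _ hl1 hl2 hl3)
    as (t11 & t12 & t21 & t22 & s11 & s12 & s21 & s22 & e1 & e2 & e3 & e4 & e5 & e6 & e7 & e8
        & e9 & e10 & e11 & e12).
  destruct (diagonalize_2x2 _ _ _ _ _ _ hm1 hm2 hm3)
    as (u11 & u12 & u21 & u22 & w11 & w12 & w21 & w22 & f1 & f2 & f3 & f4 & f5 & f6 & f7 & f8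
        & f9 & f10 & f11 & f12).
  exists (block9 t11 t12 t21 t22 u11 u12 u21 u22 1 1 1), (block9 s11 s12 s21 s22 w11 w12 w21 w22 1 1 1),
    (fun j => match j with 0%nat => l1 | 1%nat => l2 | 2%nat | 4%nat => m1 | 3%nat | 5%nat => m2
              | 6%nat => d6 | 7%nat => d7 | _ => d8 end).
  split; [|split; [|split]].
  - intros i j hi hj. unfold mmul. destruct_lt9 i; destruct_lt9 j; simpl; unfold delta; simpl; lra.
  - intros i j hi hj. unfold mmul. destruct_lt9 i; destruct_lt9 j; simpl; unfold delta; simpl; lra.
  - intros j hj. destruct_lt9 j; simpl; auto.
  - intros i j hi hj. unfold mmul. destruct_lt9 i; destruct_lt9 j; simpl; lra.
Qed.

Section North.
Variables c1 c2 c3 c4 : R.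
Hypothesis h13 : c1 + c3 <> 1.
Hypothesis h14 : c1 + c4 <> 0.
Hypothesis hL : 2 * (1 + c2) + (c1 + c2 + c3) <> 0.

(* At [k = e3], [M] preserves the decomposition of [K] into the scalar pair
   [q = (K11 + K22)/2], [p = K33]; the two vector pairs [(Ka3, K3a)], [a = 1, 2]; the
   transverse traceless tensor [((K11 - K22)/2, K(12))], on which it is [lamT2]; and the
   antisymmetric part [K[12]], on which it is the identity. *)
Definition Mscal_q (q p : R) : R :=
  let sg := (c1 + c3 + c2) * p + 2 * c2 * q in
  let trS := (2 * q + sg / 2 + sg / (c1 + c4)) / (1 - (c1 + c3) + 3 / 2 * (c1 + c2 + c3)) in
  (q + sg / 2 - (c1 + c2 + c3) * trS / 2) / (1 - (c1 + c3)).
Definition Mscal_p (q p : R) : R :=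
  let sg := (c1 + c3 + c2) * p + 2 * c2 * q in
  let trS := (2 * q + sg / 2 + sg / (c1 + c4)) / (1 - (c1 + c3) + 3 / 2 * (c1 + c2 + c3)) in
  (sg / (c1 + c4) - sg / 2 - (c1 + c2 + c3) * trS / 2) / (1 - (c1 + c3)).
Definition Mvec_s (s t : R) : R :=
  let X1 := (1 - (c1 + c3) / 2) * s - (c1 + c3) / 2 * t in
  let X2 := (c3 * s + c1 * t) / (c1 + c4) in
  (X1 - X2) / 2 + (X1 + X2) / (2 * (1 - (c1 + c3))).
Definition Mvec_t (s t : R) : R :=
  let X1 := (1 - (c1 + c3) / 2) * s - (c1 + c3) / 2 * t in
  let X2 := (c3 * s + c1 * t) / (c1 + c4) in
  - (X1 - X2) / 2 + (X1 + X2) / (2 * (1 - (c1 + c3))).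

Definition Mnorth (K : M3) : M3 := fun a b =>
  let q := (K 0%nat 0%nat + K 1%nat 1%nat) / 2 in
  let p := K 2%nat 2%nat in
  let t1 := (K 0%nat 0%nat - K 1%nat 1%nat) / 2 in
  let t2 := (K 0%nat 1%nat + K 1%nat 0%nat) / 2 in
  let r := (K 0%nat 1%nat - K 1%nat 0%nat) / 2 in
  match a, b with
  | 0%nat, 0%nat => Mscal_q q p + lamT2 c1 c3 * t1
  | 1%nat, 1%nat => Mscal_q q p - lamT2 c1 c3 * t1
  | 2%nat, 2%nat => Mscal_p q p
  | 0%nat, 1%nat => r + lamT2 c1 c3 * t2
  | 1%nat, 0%nat => - r + lamT2 c1 c3 * t2
  | 0%nat, 2%nat => Mvec_s (K 0%nat 2%nat) (K 2%nat 0%nat)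
  | 2%nat, 0%nat => Mvec_t (K 0%nat 2%nat) (K 2%nat 0%nat)
  | 1%nat, 2%nat => Mvec_s (K 1%nat 2%nat) (K 2%nat 1%nat)
  | 2%nat, 1%nat => Mvec_t (K 1%nat 2%nat) (K 2%nat 1%nat)
  | _, _ => 0
  end.

Lemma Mmap_expl_north K a b : (a < 3)%nat -> (b < 3)%nat ->
  Mmap_expl c1 c2 c3 c4 e3 K a b = Mnorth K a b.
Proof.
  intros ha hb. assert (h1 : 1 - (c1 + c3) <> 0) by lra.
  assert (h2 : 1 - (c1 + c3) + 3 / 2 * (c1 + c2 + c3) <> 0) by lra.
  unfold Mmap_expl, Qmap_expl, Linv_expl, Qpre, RmapN, Rmapa, Mnorth, Mscal_q, Mscal_p, Mvec_s, Mvec_t,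
    lamT2, e3, kvec, symp, tr3, delta.
  destruct_lt3 a; destruct_lt3 b; unfold sum3; simpl; field; solve_nonzero.
Qed.

(* Columns: the scalar sector, the two vector sectors, the antisymmetric part, the tensor sector. *)
Definition sector_basis : mat := fun I J =>
  match I, J with
  | 0%nat, 0%nat => 1 | 4%nat, 0%nat => 1 | 8%nat, 1%nat => 1 | 2%nat, 2%nat => 1 | 6%nat, 3%nat => 1
  | 5%nat, 4%nat => 1 | 7%nat, 5%nat => 1 | 1%nat, 6%nat => 1 | 3%nat, 6%nat => -1
  | 0%nat, 7%nat => 1 | 4%nat, 7%nat => -1 | 1%nat, 8%nat => 1 | 3%nat, 8%nat => 1
  | _, _ => 0 end.
Definition sector_basis_inv : mat := fun I J =>
  match I, J with
  | 0%nat, 0%nat => /2 | 0%nat, 4%nat => /2 | 1%nat, 8%nat => 1 | 2%nat, 2%nat => 1 | 3%nat, 6%nat => 1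
  | 4%nat, 5%nat => 1 | 5%nat, 7%nat => 1 | 6%nat, 1%nat => /2 | 6%nat, 3%nat => -/2
  | 7%nat, 0%nat => /2 | 7%nat, 4%nat => -/2 | 8%nat, 1%nat => /2 | 8%nat, 3%nat => /2
  | _, _ => 0 end.

Lemma sector_basis_inv_r I J : (I < 9)%nat -> (J < 9)%nat ->
  mmul 9 sector_basis sector_basis_inv I J = delta I J.
Proof.
  intros hI hJ. unfold mmul.
  destruct_lt9 I; destruct_lt9 J; unfold sector_basis, sector_basis_inv, delta; simpl; field.
Qed.

Lemma sector_basis_inv_l I J : (I < 9)%nat -> (J < 9)%nat ->
  mmul 9 sector_basis_inv sector_basis I J = delta I J.
Proof.
  intros hI hJ. unfold mmul.
  destruct_lt9 I; destruct_lt9 J; unfold sector_basis, sector_basis_inv, delta; simpl; field.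
Qed.

Definition Mnorth_blocks : mat :=
  block9 (Mscal_q 1 0) (Mscal_q 0 1) (Mscal_p 1 0) (Mscal_p 0 1)
         (Mvec_s 1 0) (Mvec_s 0 1) (Mvec_t 1 0) (Mvec_t 0 1)
         1 (lamT2 c1 c3) (lamT2 c1 c3).

Lemma Mmat_north_sectors I J : (I < 9)%nat -> (J < 9)%nat ->
  mmul 9 (Mmat c1 c2 c3 c4 e3) sector_basis I J = mmul 9 sector_basis Mnorth_blocks I J.
Proof.
  intros hI hJ. assert (h1 : 1 - (c1 + c3) <> 0) by lra.
  assert (h2 : 1 - (c1 + c3) + 3 / 2 * (c1 + c2 + c3) <> 0) by lra.
  unfold mmul.
  rewrite (sumn_ext 9 _ (fun L => Mnorth (Kof (unitv L)) (I / 3)%nat (I mod 3)%nat * sector_basis L J))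
    by (intros; unfold Mmat; rewrite Mmap_eq, Mmap_expl_north; auto using div3_lt, mod3_lt).
  destruct_lt9 I; destruct_lt9 J;
    unfold Mnorth, sector_basis, Mnorth_blocks, block9, Kof, unitv, Mscal_q, Mscal_p, Mvec_s, Mvec_t;
    simpl; field; solve_nonzero.
Qed.

Lemma Mscal_trace : Mscal_q 1 0 + Mscal_p 0 1 = 1 + lamS2 c1 c2 c3 c4.
Proof.
  assert (h1 : 1 - (c1 + c3) <> 0) by lra.
  assert (h2 : 1 - (c1 + c3) + 3 / 2 * (c1 + c2 + c3) <> 0) by lra.
  assert (h3 : 2 + 2 * c2 + (c1 + c2 + c3) <> 0) by lra.
  unfold Mscal_q, Mscal_p, lamS2. field; solve_nonzero.
Qed.

Lemma Mscal_det : Mscal_q 1 0 * Mscal_p 0 1 - Mscal_q 0 1 * Mscal_p 1 0 = 1 * lamS2 c1 c2 c3 c4.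
Proof.
  assert (h1 : 1 - (c1 + c3) <> 0) by lra.
  assert (h2 : 1 - (c1 + c3) + 3 / 2 * (c1 + c2 + c3) <> 0) by lra.
  assert (h3 : 2 + 2 * c2 + (c1 + c2 + c3) <> 0) by lra.
  unfold Mscal_q, Mscal_p, lamS2. field; solve_nonzero.
Qed.

Lemma Mvec_trace : Mvec_s 1 0 + Mvec_t 0 1 = 1 + lamV2 c1 c3 c4.
Proof.
  assert (h1 : 1 - (c1 + c3) <> 0) by lra. unfold Mvec_s, Mvec_t, lamV2. field; solve_nonzero.
Qed.

Lemma Mvec_det : Mvec_s 1 0 * Mvec_t 0 1 - Mvec_s 0 1 * Mvec_t 1 0 = 1 * lamV2 c1 c3 c4.
Proof.
  assert (h1 : 1 - (c1 + c3) <> 0) by lra. unfold Mvec_s, Mvec_t, lamV2. field; solve_nonzero.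
Qed.

Definition M_spectrum (mu : R) : Prop :=
  mu = 1 \/ mu = lamT2 c1 c3 \/ mu = lamV2 c1 c3 c4 \/ mu = lamS2 c1 c2 c3 c4.

Lemma Mmat_north_diagonalizable : lamV2 c1 c3 c4 <> 1 -> lamS2 c1 c2 c3 c4 <> 1 ->
  diagonalizable_with 9 (Mmat c1 c2 c3 c4 e3) M_spectrum.
Proof.
  intros hV hS.
  apply (diagonalizable_with_similar 9 _ Mnorth_blocks sector_basis sector_basis_inv);
    auto using Mmat_north_sectors, sector_basis_inv_r, sector_basis_inv_l.
  apply (block9_diagonalizable _ _ _ _ _ 1 (lamS2 c1 c2 c3 c4) _ _ _ _ 1 (lamV2 c1 c3 c4));
    auto using Mscal_trace, Mscal_det, Mvec_trace, Mvec_det; unfold M_spectrum; tauto.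
Qed.

End North.

(** * Diagonalizing [P = [[0, Q], [R, 0]]] from a diagonalization of [M = Q R] *)

Section BlockAntidiagonal.
Variables (P T Ti : mat) (mu : nat -> R).

Definition Qblk : mat := fun i m => P i (9 + m)%nat.
Definition Rblk : mat := fun m j => P (9 + m)%nat j.
Definition Mblk : mat := fun i j => sumn 12 (fun m => Qblk i m * Rblk m j).
Definition Minv : mat := fun a b => sumn 9 (fun q => T a q * Ti q b / mu q).
Definition RT : mat := fun m j => sumn 9 (fun l => Rblk m l * T l j).
Definition TiQ : mat := fun j m => sumn 9 (fun l => Ti j l * Qblk l m).
Definition RMinvQ : mat := fun m1 m2 =>
  sumn 9 (fun b => sumn 9 (fun a => Rblk m1 a * Minv a b) * Qblk b m2).
(* The projection of [W] onto [ker Q] along [im R]. *)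
Definition kerQ_proj : mat := fun m1 m2 => delta m1 m2 - RMinvQ m1 m2.

Hypothesis HPVV : forall i j, (i < 9)%nat -> (j < 9)%nat -> P i j = 0.
Hypothesis HPWW : forall i j, (9 <= i < 21)%nat -> (9 <= j < 21)%nat -> P i j = 0.
Hypothesis HT_r : forall i j, (i < 9)%nat -> (j < 9)%nat -> mmul 9 T Ti i j = delta i j.
Hypothesis HT_l : forall i j, (i < 9)%nat -> (j < 9)%nat -> mmul 9 Ti T i j = delta i j.
Hypothesis Hmu : forall j, (j < 9)%nat -> 0 < mu j.
Hypothesis HM : forall i j, (i < 9)%nat -> (j < 9)%nat -> mmul 9 Mblk T i j = T i j * mu j.
Hypothesis HQ_ker : forall i m, (i < 9)%nat -> (m < 3)%nat -> Qblk i (6 + m)%nat = 0.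
Hypothesis HQ_inj : forall w, (forall i, (i < 9)%nat -> sumn 12 (fun m => Qblk i m * w m) = 0) ->
  forall m, (m < 6 \/ 9 <= m < 12)%nat -> w m = 0.

Lemma Mblk_Minv i b : (i < 9)%nat -> (b < 9)%nat -> mmul 9 Mblk Minv i b = delta i b.
Proof.
  intros hi hb. unfold mmul, Minv.
  transitivity (sumn 9 (fun q => mmul 9 Mblk T i q * (Ti q b / mu q))).
  { unfold mmul. rewrite (sumn_ext 9 _ (fun a => sumn 9 (fun q => Mblk i a * T a q * (Ti q b / mu q)))).
    - rewrite sumn_swap. apply sumn_ext; intros q hq. rewrite <- sumn_mul_r. apply sumn_ext; intros; ring.
    - intros a ha. rewrite <- sumn_mul_l. apply sumn_ext; intros q hq. unfold Rdiv; ring. }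
  rewrite <- (HT_r i b hi hb). unfold mmul at 2. apply sumn_ext; intros q hq.
  rewrite HM by auto. specialize (Hmu q hq). field. lra.
Qed.

Lemma Minv_T a j : (a < 9)%nat -> (j < 9)%nat -> sumn 9 (fun b => Minv a b * (T b j * mu j)) = T a j.
Proof.
  intros ha hj. unfold Minv.
  transitivity (sumn 9 (fun q => T a q / mu q * mmul 9 Ti T q j * mu j)).
  { rewrite (sumn_ext 9 _ (fun b => sumn 9 (fun q => T a q / mu q * (Ti q b * T b j) * mu j))).
    - rewrite sumn_swap. apply sumn_ext; intros q hq. unfold mmul.
      rewrite <- sumn_mul_l, <- sumn_mul_r. apply sumn_ext; intros; ring.
    - intros b hb. rewrite <- sumn_mul_r. apply sumn_ext; intros q hq. unfold Rdiv; ring. }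
  rewrite (sumn_ext 9 _ (fun q => (T a q * (mu j / mu q)) * delta q j)).
  - rewrite sumn_delta_r by auto. specialize (Hmu j hj). field. lra.
  - intros q hq. rewrite HT_l by auto. specialize (Hmu q hq). field. lra.
Qed.

Lemma Q_RT b j : (b < 9)%nat -> (j < 9)%nat -> sumn 12 (fun m => Qblk b m * RT m j) = T b j * mu j.
Proof.
  intros hb hj. rewrite <- HM by auto. unfold mmul, RT, Mblk.
  rewrite (sumn_ext 12 _ (fun m => sumn 9 (fun l => Qblk b m * Rblk m l * T l j))).
  - rewrite sumn_swap. apply sumn_ext; intros. rewrite <- sumn_mul_r. auto.
  - intros. rewrite <- sumn_mul_l. apply sumn_ext; intros; ring.
Qed.

Lemma RT_TiQ m m' : sumn 9 (fun j => RT m j * TiQ j m' / mu j) = RMinvQ m m'.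
Proof.
  unfold RT, TiQ, RMinvQ, Minv.
  rewrite (sumn_ext 9 _ (fun j => sumn 9 (fun b =>
     (sumn 9 (fun a => Rblk m a * T a j) * / mu j) * (Ti j b * Qblk b m'))))
    by (intros; rewrite sumn_mul_l; unfold Rdiv; ring).
  rewrite sumn_swap. apply sumn_ext; intros b hb.
  rewrite (sumn_ext 9 _ (fun j => sumn 9 (fun a => Rblk m a * (T a j * Ti j b / mu j)) * Qblk b m')).
  - rewrite sumn_mul_r. f_equal. rewrite sumn_swap. apply sumn_ext; intros a ha.
    rewrite <- sumn_mul_l. auto.
  - intros j hj. rewrite <- !sumn_mul_r. apply sumn_ext; intros; unfold Rdiv; ring.
Qed.

Lemma TiQ_ker j m : (m < 3)%nat -> TiQ j (6 + m)%nat = 0.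
Proof. intros hm. unfold TiQ. apply sumn_eq0; intros l hl. rewrite HQ_ker by auto. ring. Qed.

Lemma RMinvQ_ker x m : (m < 3)%nat -> RMinvQ x (6 + m)%nat = 0.
Proof. intros hm. unfold RMinvQ. apply sumn_eq0; intros l hl. rewrite HQ_ker by auto. ring. Qed.

Lemma Q_RMinvQ i m' : (i < 9)%nat -> sumn 12 (fun x => Qblk i x * RMinvQ x m') = Qblk i m'.
Proof.
  intros hi. unfold RMinvQ. rewrite sumn_mul_sumn.
  rewrite (sumn_ext 9 _ (fun b => delta i b * Qblk b m')).
  - apply (sumn_delta_l 9 (fun b => Qblk b m') i); auto.
  - intros b hb. f_equal. rewrite <- (Mblk_Minv i b hi hb). unfold mmul, Mblk.
    rewrite sumn_mul_sumn. auto.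
Qed.

Lemma RMinvQ_off_ker m m' : (m < 6 \/ 9 <= m < 12)%nat -> (m' < 12)%nat -> RMinvQ m m' = delta m m'.
Proof.
  intros hm hm'.
  assert (E : kerQ_proj m m' = 0).
  { apply (HQ_inj (fun x => kerQ_proj x m')); auto. intros i hi. unfold kerQ_proj.
    rewrite (sumn_ext 12 _ (fun x => Qblk i x * delta x m' - Qblk i x * RMinvQ x m')) by (intros; ring).
    rewrite sumn_sub, sumn_delta_r, Q_RMinvQ by auto. ring. }
  unfold kerQ_proj in E. lra.
Qed.

Lemma TiQ_RT j j' : (j < 9)%nat -> (j' < 9)%nat ->
  sumn 12 (fun m => TiQ j m * RT m j') = delta j j' * mu j'.
Proof.
  intros hj hj'. unfold TiQ.
  rewrite <- (sumn_mul_sumn 9 12 (fun l => Ti j l) (fun l m => Qblk l m) (fun m => RT m j')).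
  rewrite (sumn_ext 9 _ (fun l => Ti j l * T l j' * mu j')).
  - rewrite sumn_mul_r, <- HT_l by auto. auto.
  - intros l hl. rewrite Q_RT by auto. ring.
Qed.

Lemma RMinvQ_RT x j' : (j' < 9)%nat -> sumn 12 (fun m => RMinvQ x m * RT m j') = RT x j'.
Proof.
  intros hj'. unfold RMinvQ.
  rewrite <- (sumn_mul_sumn 9 12 (fun b => sumn 9 (fun a => Rblk x a * Minv a b))).
  rewrite (sumn_ext 9 _ (fun b => sumn 9 (fun a => Rblk x a * Minv a b) * (T b j' * mu j')))
    by (intros; rewrite Q_RT by auto; auto).
  rewrite <- (sumn_mul_sumn 9 9 (fun a => Rblk x a) (fun a b => Minv a b) (fun b => T b j' * mu j')).
  unfold RT. apply sumn_ext; intros a ha. rewrite Minv_T by auto. auto.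
Qed.

Definition sgn21 (J : nat) : R := if (J <? 9)%nat then 1 else -1.
Definition idx21 (J : nat) : nat := if (J <? 9)%nat then J else (J - 9)%nat.

(* Column [J < 18] is the eigenvector [(sgn sqrt mu_j t_j, R t_j)] of [P], [j = idx21 J],
   built from the column [t_j] of [T]; column [J >= 18] is the kernel vector [e_(J-3)]. *)
Definition Teig : mat := fun I J =>
  if (J <? 18)%nat then
    (if (I <? 9)%nat then sgn21 J * sqrt (mu (idx21 J)) * T I (idx21 J) else RT (I - 9)%nat (idx21 J))
  else delta I (J - 3).
Definition Teig_inv : mat := fun J I =>
  if (J <? 18)%nat then
    (if (I <? 9)%nat then sgn21 J * Ti (idx21 J) I / (2 * sqrt (mu (idx21 J)))
     else TiQ (idx21 J) (I - 9)%nat / (2 * mu (idx21 J)))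
  else (if (I <? 9)%nat then 0 else kerQ_proj (J - 12)%nat (I - 9)%nat).
Definition eig21 (J : nat) : R := if (J <? 18)%nat then sgn21 J * sqrt (mu (idx21 J)) else 0.

Lemma idx21_lt J : (J < 18)%nat -> (idx21 J < 9)%nat.
Proof. unfold idx21; destruct (Nat.ltb_spec J 9); lia. Qed.

Lemma sgn21_sq J : sgn21 J * sgn21 J = 1.
Proof. unfold sgn21; destruct (J <? 9)%nat; ring. Qed.

Lemma sqrt_mu_pos j : (j < 9)%nat -> 0 < sqrt (mu j).
Proof. intros; apply sqrt_lt_R0, Hmu; auto. Qed.

Lemma sqrt_mu_sq j : (j < 9)%nat -> sqrt (mu j) * sqrt (mu j) = mu j.
Proof. intros hj. apply sqrt_sqrt. specialize (Hmu j hj); lra. Qed.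

Lemma P_V_sum i X : (i < 9)%nat ->
  sumn 21 (fun L => P i L * X L) = sumn 12 (fun m => Qblk i m * X (9 + m)%nat).
Proof.
  intros hi. rewrite (sumn_split 9 12), (sumn_eq0 9); [rewrite Rplus_0_l; reflexivity|].
  intros l hl; rewrite HPVV; auto; ring.
Qed.

Lemma P_W_sum m X : (m < 12)%nat ->
  sumn 21 (fun L => P (9 + m)%nat L * X L) = sumn 9 (fun l => Rblk m l * X l).
Proof.
  intros hm. rewrite (sumn_split 9 12), (sumn_eq0 12); [rewrite Rplus_0_r; reflexivity|].
  intros l hl; rewrite HPWW by lia; ring.
Qed.

Lemma P_Teig I J : (I < 21)%nat -> (J < 21)%nat -> mmul 21 P Teig I J = Teig I J * eig21 J.
Proof.
  intros hI hJ. unfold mmul.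
  destruct (Nat.lt_ge_cases I 9) as [hi|hi]; [|replace I with (9 + (I - 9))%nat by lia];
    [rewrite P_V_sum by auto | rewrite P_W_sum by lia];
    (destruct (Nat.lt_ge_cases J 18) as [hj|hj]; [pose proof (idx21_lt J hj) as hj'|]).
  - rewrite (sumn_ext 12 _ (fun m => Qblk I m * RT m (idx21 J)))
      by (intros m hm; unfold Teig; simpl_ltb; replace (9 + m - 9)%nat with m by lia; auto).
    rewrite Q_RT by auto. unfold Teig, eig21; simpl_ltb. rewrite <- (sqrt_mu_sq (idx21 J)) at 1 by auto.
    transitivity (T I (idx21 J) * sqrt (mu (idx21 J)) * sqrt (mu (idx21 J)) * (sgn21 J * sgn21 J));
      [rewrite sgn21_sq|]; ring.
  - rewrite (sumn_ext 12 _ (fun m => Qblk I m * delta m (J - 12)%nat)).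
    + rewrite sumn_delta_r by lia. replace (J - 12)%nat with (6 + (J - 18))%nat by lia.
      rewrite HQ_ker by lia. unfold eig21; simpl_ltb. ring.
    + intros m hm. unfold Teig; simpl_ltb. rewrite (delta_sub 9 (9 + m)%nat (J - 3)%nat) by lia.
      replace (9 + m - 9)%nat with m by lia. replace (J - 3 - 9)%nat with (J - 12)%nat by lia. auto.
  - rewrite (sumn_ext 9 _ (fun l => Rblk (I - 9)%nat l * T l (idx21 J) * (sgn21 J * sqrt (mu (idx21 J)))))
      by (intros; unfold Teig; simpl_ltb; ring).
    rewrite sumn_mul_r. unfold Teig, eig21, RT; simpl_ltb. replace (9 + (I - 9) - 9)%nat with (I - 9)%nat by lia.
    auto.
  - rewrite sumn_eq0; [unfold eig21; simpl_ltb; ring|].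
    intros l hl. unfold Teig; simpl_ltb. rewrite delta_neq by lia. ring.
Qed.

Lemma Teig_inv_Teig_eig J J' : (J < 18)%nat -> (J' < 18)%nat ->
  mmul 21 Teig_inv Teig J J' = delta J J'.
Proof.
  intros hJ hJ'. pose proof (idx21_lt J hJ) as hj. pose proof (idx21_lt J' hJ') as hj'.
  set (j := idx21 J) in *. set (j' := idx21 J').
  assert (HV : sumn 9 (fun i => Teig_inv J i * Teig i J') = sgn21 J * sgn21 J' * delta j j' / 2).
  { rewrite (sumn_ext 9 _ (fun i => Ti j i * T i j' * (sgn21 J * sgn21 J' * sqrt (mu j') / (2 * sqrt (mu j)))))
      by (intros i hi; unfold Teig, Teig_inv; simpl_ltb; fold j j'; pose proof (sqrt_mu_pos j hj); field; lra).
    rewrite sumn_mul_r. fold (mmul 9 Ti T j j'). rewrite HT_l by auto.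
    pose proof (sqrt_mu_pos j hj). destruct (Nat.eq_dec j j') as [e|ne].
    - rewrite <- e, delta_diag. field. lra.
    - rewrite delta_neq by auto. field. lra. }
  assert (HW : sumn 12 (fun m => Teig_inv J (9 + m)%nat * Teig (9 + m)%nat J') = delta j j' / 2).
  { rewrite (sumn_ext 12 _ (fun m => TiQ j m * RT m j' * / (2 * mu j))).
    - rewrite sumn_mul_r, TiQ_RT by auto.
      pose proof (Hmu j hj). destruct (Nat.eq_dec j j') as [e|ne].
      + rewrite <- e, delta_diag. field. lra.
      + rewrite delta_neq by auto. field. lra.
    - intros m hm. unfold Teig, Teig_inv; simpl_ltb. fold j j'. replace (9 + m - 9)%nat with m by lia.
      pose proof (Hmu j hj). field. lra. }
  unfold mmul. rewrite (sumn_split 9 12), HV, HW.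
  unfold j, j', sgn21, idx21, delta in *.
  destruct (Nat.ltb_spec J 9); destruct (Nat.ltb_spec J' 9);
    destruct (Nat.eqb_spec J J'); try destruct (Nat.eqb_spec (J - 9) (J' - 9));
    try destruct (Nat.eqb_spec J (J' - 9)); try destruct (Nat.eqb_spec (J - 9) J'); lra || lia.
Qed.

Lemma Teig_inv_Teig_ker J J' : (J < 21)%nat -> (18 <= J' < 21)%nat ->
  mmul 21 Teig_inv Teig J J' = delta J J'.
Proof.
  intros hJ hJ'. unfold mmul.
  rewrite (sumn_ext 21 _ (fun L => Teig_inv J L * delta L (J' - 3)))
    by (intros L hL; unfold Teig; simpl_ltb; auto).
  rewrite sumn_delta_r by lia. unfold Teig_inv; simpl_ltb.
  replace (J' - 3 - 9)%nat with (6 + (J' - 18))%nat by lia.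
  destruct (Nat.ltb_spec J 18).
  - rewrite TiQ_ker, delta_neq by lia. unfold Rdiv; ring.
  - unfold kerQ_proj. rewrite RMinvQ_ker by lia. rewrite (delta_sub 12 J J') by lia.
    replace (J' - 12)%nat with (6 + (J' - 18))%nat by lia. ring.
Qed.

Lemma Teig_inv_Teig_mixed J J' : (18 <= J < 21)%nat -> (J' < 18)%nat ->
  mmul 21 Teig_inv Teig J J' = delta J J'.
Proof.
  intros hJ hJ'. pose proof (idx21_lt J' hJ') as hj'. unfold mmul.
  rewrite (sumn_split 9 12), (sumn_eq0 9) by (intros i hi; unfold Teig_inv; simpl_ltb; ring).
  rewrite (sumn_ext 12 _ (fun m => delta (J - 12)%nat m * RT m (idx21 J') - RMinvQ (J - 12)%nat m * RT m (idx21 J')))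
    by (intros m hm; unfold Teig, Teig_inv, kerQ_proj; simpl_ltb; replace (9 + m - 9)%nat with m by lia; ring).
  rewrite sumn_sub, (sumn_delta_l 12 (fun m => RT m (idx21 J'))), RMinvQ_RT, delta_neq by lia. ring.
Qed.

Lemma Teig_inv_Teig J J' : (J < 21)%nat -> (J' < 21)%nat -> mmul 21 Teig_inv Teig J J' = delta J J'.
Proof.
  intros hJ hJ'.
  destruct (Nat.lt_ge_cases J' 18); [destruct (Nat.lt_ge_cases J 18)|].
  - apply Teig_inv_Teig_eig; auto.
  - apply Teig_inv_Teig_mixed; lia.
  - apply Teig_inv_Teig_ker; lia.
Qed.

Lemma Teig_pair I I' j : (j < 9)%nat ->
  Teig I j * Teig_inv j I' + Teig I (9 + j)%nat * Teig_inv (9 + j)%nat I' =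
  if (I <? 9)%nat then (if (I' <? 9)%nat then T I j * Ti j I' else 0)
  else (if (I' <? 9)%nat then 0 else RT (I - 9)%nat j * TiQ j (I' - 9)%nat / mu j).
Proof.
  intros hj. pose proof (sqrt_mu_pos j hj). pose proof (Hmu j hj).
  unfold Teig, Teig_inv, sgn21, idx21; simpl_ltb. replace (9 + j - 9)%nat with j by lia.
  destruct (I <? 9)%nat; destruct (I' <? 9)%nat; field; lra.
Qed.

Lemma Teig_Teig_inv I I' : (I < 21)%nat -> (I' < 21)%nat -> mmul 21 Teig Teig_inv I I' = delta I I'.
Proof.
  intros hI hI'. unfold mmul. rewrite (sumn_split 18 3), (sumn_split 9 9), <- sumn_add.
  rewrite (sumn_ext 9 _ _ (fun j hj => Teig_pair I I' j hj)).
  rewrite (sumn_ext 3 _ (fun m => delta I (15 + m) * Teig_inv (18 + m)%nat I'))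
    by (intros m hm; unfold Teig; simpl_ltb; replace (18 + m - 3)%nat with (15 + m)%nat by lia; auto).
  destruct (Nat.ltb_spec I 9); destruct (Nat.ltb_spec I' 9).
  - rewrite (sumn_eq0 3) by (intros; rewrite delta_neq by lia; ring).
    fold (mmul 9 T Ti I I'). rewrite HT_r by auto. ring.
  - rewrite (sumn_eq0 9), (sumn_eq0 3), delta_neq by (intros; try rewrite delta_neq; lia || ring). ring.
  - rewrite (sumn_eq0 9), (sumn_eq0 3), delta_neq by (intros; unfold Teig_inv; simpl_ltb; lia || ring).
    ring.
  - rewrite RT_TiQ, (delta_sub 9 I I') by lia.
    destruct (Nat.lt_ge_cases I 15); [|destruct (Nat.lt_ge_cases I 18)].
    + rewrite sumn_eq0, RMinvQ_off_ker by (intros; try rewrite delta_neq; lia || ring). ring.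
    + rewrite (sumn_ext 3 _ (fun m => delta (I - 15) m * kerQ_proj (6 + m)%nat (I' - 9)%nat))
        by (intros m hm; unfold Teig_inv; simpl_ltb; rewrite (delta_sub 15 I (15 + m)) by lia;
            replace (18 + m - 12)%nat with (6 + m)%nat by lia; replace (15 + m - 15)%nat with m by lia;
            auto).
      rewrite (sumn_delta_l 3 (fun m => kerQ_proj (6 + m)%nat (I' - 9)%nat)) by lia.
      unfold kerQ_proj. replace (6 + (I - 15))%nat with (I - 9)%nat by lia. ring.
    + rewrite sumn_eq0, RMinvQ_off_ker by (intros; try rewrite delta_neq; lia || ring). ring.
Qed.

Lemma block_antidiagonal_diagonalizable :
  diagonalizable_with 21 P
    (fun x => x = 0 \/ exists j, (j < 9)%nat /\ (x = sqrt (mu j) \/ x = - sqrt (mu j))).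
Proof.
  exists Teig, Teig_inv, eig21.
  split; [|split; [|split]]; auto using Teig_Teig_inv, Teig_inv_Teig, P_Teig.
  intros J hJ. unfold eig21. destruct (Nat.ltb_spec J 18); [right|left; auto].
  exists (idx21 J). split; [apply idx21_lt; auto|].
  unfold sgn21; destruct (J <? 9)%nat; [left|right]; ring.
Qed.

End BlockAntidiagonal.

(** * The spectrum of [P] at the north pole *)

Section PNorth.
Variables c1 c2 c3 c4 : R.
Hypothesis h13 : c1 + c3 <> 1.
Hypothesis h14 : c1 + c4 <> 0.
Hypothesis hL : 2 * (1 + c2) + (c1 + c2 + c3) <> 0.

Let P0 := Pmat c1 c2 c3 c4 e3.

Lemma Pmat_north_VV i j : (i < 9)%nat -> (j < 9)%nat -> P0 i j = 0.
Proof.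
  intros hi hj. unfold P0, Pmat. rewrite Pmap_eq by auto. unfold Pmap_expl. simpl_ltb.
  rewrite (Qmap_expl_ext c1 c2 c3 c4 e3 _ (fun _ _ => 0) _ (fun _ => 0)); auto using div3_lt, mod3_lt.
  - unfold Qmap_expl, Linv_expl, Qpre, tr3, sum3. unfold Rdiv. ring.
  - intros a b ha hb. unfold Nof, unitv. destruct (Nat.eqb_spec (9 + 3 * a + b) j); auto; lia.
  - intros b hb. unfold aof, unitv. destruct (Nat.eqb_spec (18 + b) j); auto; lia.
Qed.

Lemma Pmat_north_WW i j : (9 <= i < 21)%nat -> (9 <= j < 21)%nat -> P0 i j = 0.
Proof.
  intros hi hj. unfold P0, Pmat. rewrite Pmap_eq by auto. unfold Pmap_expl. simpl_ltb.
  assert (HK : eq3 (Kof (unitv j)) (fun _ _ => 0)).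
  { intros a b ha hb. unfold Kof, unitv. destruct (Nat.eqb_spec (3 * a + b) j); auto; lia. }
  destruct (Nat.ltb_spec i 18).
  - rewrite (RmapN_ext c1 c2 c3 c4 e3 _ _ _ _ HK) by apply mod3_lt. unfold RmapN, symp, tr3, sum3, Rdiv; ring.
  - rewrite (Rmapa_ext c1 c2 c3 c4 e3 _ _ _ HK) by lia. unfold Rmapa, tr3, sum3, Rdiv; ring.
Qed.

Lemma Pmat_north_Q_ker i m : (i < 9)%nat -> (m < 3)%nat -> Qblk P0 i (6 + m)%nat = 0.
Proof.
  intros hi hm. unfold Qblk, P0, Pmat. rewrite Pmap_eq by auto. unfold Pmap_expl. simpl_ltb.
  destruct_lt9 i; destruct_lt3 m;
    unfold Qmap_expl, Linv_expl, Qpre, Nof, aof, unitv, e3, kvec, tr3, delta; unfold sum3; simpl;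
    unfold Rdiv; ring.
Qed.

(* At [k = e3] the equation [Qpre N a = 0] reads [N_2b = -c14/2 delta_1b a_3],
   [N_1b = c14/2 delta_2b a_3], [a_b = c14/2 delta_3b a_3] (paper indices). *)
Lemma Qpre_north_inj N av : c1 + c4 <> 2 -> eq3 (Qpre c1 c4 e3 N av) (fun _ _ => 0) ->
  (forall a b, (a < 2)%nat -> (b < 3)%nat -> N a b = 0) /\ (forall b, (b < 3)%nat -> av b = 0).
Proof.
  intros h2 HQ.
  assert (E : forall a b, (a < 3)%nat -> (b < 3)%nat -> Qpre c1 c4 e3 N av a b = 0) by auto.
  pose proof (E 0 0 ltac:(lia) ltac:(lia))%nat as e00; pose proof (E 0 1 ltac:(lia) ltac:(lia))%nat as e01;
  pose proof (E 0 2 ltac:(lia) ltac:(lia))%nat as e02; pose proof (E 1 0 ltac:(lia) ltac:(lia))%nat as e10;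
  pose proof (E 1 1 ltac:(lia) ltac:(lia))%nat as e11; pose proof (E 1 2 ltac:(lia) ltac:(lia))%nat as e12;
  pose proof (E 2 0 ltac:(lia) ltac:(lia))%nat as e20; pose proof (E 2 1 ltac:(lia) ltac:(lia))%nat as e21;
  pose proof (E 2 2 ltac:(lia) ltac:(lia))%nat as e22.
  unfold Qpre, e3, kvec, delta, sum3 in *; simpl in *.
  assert (ha2 : av 2%nat = 0).
  { assert (av 2%nat * (2 - (c1 + c4)) = 0) by lra.
    destruct (Rmult_integral _ _ H); auto. exfalso; lra. }
  split.
  - intros a b ha hb. destruct a as [|[|a]]; [| |lia]; destruct_lt3 b; lra.
  - intros b hb. destruct_lt3 b; lra.
Qed.

Lemma Pmat_north_Q_inj w : c1 + c4 <> 2 ->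
  (forall i, (i < 9)%nat -> sumn 12 (fun m => Qblk P0 i m * w m) = 0) ->
  forall m, (m < 6 \/ 9 <= m < 12)%nat -> w m = 0.
Proof.
  intros h2 Hw. set (v := fun L => if (L <? 9)%nat then 0 else w (L - 9)%nat).
  assert (HP : forall i, (i < 9)%nat -> Pmap_expl c1 c2 c3 c4 e3 v i = 0).
  { intros i hi. rewrite Pmap_expl_linear, (sumn_split 9 12), (sumn_eq0 9) by (intros; unfold v; simpl_ltb; lia || ring).
    rewrite Rplus_0_l, <- (Hw i hi). apply sumn_ext; intros m hm.
    unfold Qblk, P0, Pmat, v; simpl_ltb. rewrite Pmap_eq by auto. do 2 f_equal. lia. }
  set (X := Qpre c1 c4 e3 (Nof v) (aof v)).
  assert (HX : eq3 (Linv_expl c1 c2 c3 X) (fun _ _ => 0)).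
  { intros a b ha hb. pose proof (HP (3 * a + b)%nat ltac:(lia)) as H.
    unfold Pmap_expl in H. simpl_ltb. destruct_lt3 a; destruct_lt3 b; exact H. }
  assert (HQ : eq3 X (fun _ _ => 0)).
  { intros a b ha hb. rewrite <- (Lmap_Linv_expl c1 c2 c3 h13 hL X a b ha hb).
    unfold Lmap, symp, tr3, sum3. rewrite !HX by lia. unfold Rdiv; ring. }
  destruct (Qpre_north_inj _ _ h2 HQ) as [HN Ha].
  intros m hm.
  destruct m as [|[|[|[|[|[|[|[|[|[|[|[|m]]]]]]]]]]]]; try (exfalso; lia);
    first [ apply (HN 0%nat 0%nat) | apply (HN 0%nat 1%nat) | apply (HN 0%nat 2%nat)
          | apply (HN 1%nat 0%nat) | apply (HN 1%nat 1%nat) | apply (HN 1%nat 2%nat)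
          | apply (Ha 0%nat) | apply (Ha 1%nat) | apply (Ha 2%nat) ]; lia.
Qed.

Lemma c14_neq_2 : 0 < lamS2 c1 c2 c3 c4 -> c1 + c4 <> 2.
Proof.
  intros hS E. unfold lamS2 in hS. rewrite E in hS. unfold Rdiv in hS.
  rewrite Rminus_diag, Rmult_0_r, Rmult_0_l in hS. lra.
Qed.

Definition P_spectrum (mu : R) : Prop :=
  mu = 0 \/ mu = 1 \/ mu = -1
  \/ mu = sqrt (lamT2 c1 c3) \/ mu = - sqrt (lamT2 c1 c3)
  \/ mu = sqrt (lamV2 c1 c3 c4) \/ mu = - sqrt (lamV2 c1 c3 c4)
  \/ mu = sqrt (lamS2 c1 c2 c3 c4) \/ mu = - sqrt (lamS2 c1 c2 c3 c4).

Lemma Pmat_north_diagonalizable :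
  0 < lamT2 c1 c3 -> 0 < lamV2 c1 c3 c4 -> 0 < lamS2 c1 c2 c3 c4 ->
  lamV2 c1 c3 c4 <> 1 -> lamS2 c1 c2 c3 c4 <> 1 ->
  diagonalizable_with 21 P0 P_spectrum.
Proof.
  intros hT hV hS hV1 hS1.
  destruct (Mmat_north_diagonalizable c1 c2 c3 c4 h13 h14 hL hV1 hS1) as (T & Ti & mu & hTr & hTl & hmu & hM).
  assert (hmu_pos : forall j, (j < 9)%nat -> 0 < mu j).
  { intros j hj. destruct (hmu j hj) as [e|[e|[e|e]]]; rewrite e; lra. }
  eapply diagonalizable_with_weaken; [|apply (block_antidiagonal_diagonalizable P0 T Ti mu)];
    auto using Pmat_north_VV, Pmat_north_WW, Pmat_north_Q_ker, Pmat_north_Q_inj, c14_neq_2.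
  - intros x [->|(j & hj & hx)]; [left; auto|].
    destruct (hmu j hj) as [e|[e|[e|e]]]; rewrite e in hx; rewrite ?sqrt_1 in hx;
      unfold P_spectrum; tauto.
  - intros i j hi hj. rewrite <- hM by auto. apply mmul_ext_l. intros l hl.
    unfold Mblk, Qblk, Rblk. rewrite Mmat_eq_P2 by auto. unfold mmul.
    rewrite (sumn_split 9 12), (sumn_eq0 9) by (intros; rewrite Pmat_north_VV by auto; ring).
    rewrite Rplus_0_l; reflexivity.
Qed.

End PNorth.

(** * A symmetrizer built from spectral projections *)

Fixpoint sum_list (S : list R) (f : R -> R) : R :=
  match S with nil => 0 | m :: S' => f m + sum_list S' f end.

Lemma sum_list_ext S f g : (forall m, In m S -> f m = g m) -> sum_list S f = sum_list S g.
Proof. induction S; simpl; intros H; auto. rewrite H, IHS; auto. Qed.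

Lemma sum_list_sumn S n F :
  sum_list S (fun m => sumn n (fun q => F m q)) = sumn n (fun q => sum_list S (fun m => F m q)).
Proof.
  induction S as [|a S IH]; simpl; [symmetry; apply sumn_eq0; auto|].
  rewrite IH, <- sumn_add. auto.
Qed.

Lemma sum_list_mul_l S c f : sum_list S (fun m => c * f m) = c * sum_list S f.
Proof. induction S; simpl; [ring|]. rewrite IHS; ring. Qed.

Lemma sum_list_mul_r S c f : sum_list S (fun m => f m * c) = sum_list S f * c.
Proof. induction S; simpl; [ring|]. rewrite IHS; ring. Qed.

Lemma sum_list_ge0 S f : (forall m, In m S -> 0 <= f m) -> 0 <= sum_list S f.
Proof.
  induction S; simpl; intros H; [lra|].
  pose proof (H a (or_introl eq_refl)). pose proof (IHS (fun m h => H m (or_intror h))). lra.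
Qed.

Lemma sum_list_le0 S f : (forall m, In m S -> 0 <= f m) -> sum_list S f <= 0 ->
  forall m, In m S -> f m <= 0.
Proof.
  induction S; simpl; intros H Hs m hm; [contradiction|].
  pose proof (H a (or_introl eq_refl)). pose proof (sum_list_ge0 S f (fun m h => H m (or_intror h))).
  destruct hm as [->|hm]; [lra|]. apply IHS; auto. lra.
Qed.

Lemma sum_list_quad n (L : list R) (G : R -> mat) (v : vec) :
  sumn n (fun i => v i * sumn n (fun j => sum_list L (fun m => G m i j) * v j))
  = sum_list L (fun m => sumn n (fun i => v i * sumn n (fun j => G m i j * v j))).
Proof.
  induction L as [|a L IH]; simpl.
  - apply sumn_eq0; intros. rewrite sumn_eq0; [ring|]. intros; ring.
  - rewrite <- IH, <- sumn_add. apply sumn_ext; intros.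
    rewrite <- Rmult_plus_distr_l, <- sumn_add. f_equal. apply sumn_ext; intros; ring.
Qed.

(* The Lagrange polynomial of the node [m] for the nodes [S] (repetitions of [m] are skipped). *)
Fixpoint lagrange (S : list R) (m x : R) : R :=
  match S with
  | nil => 1
  | c :: S' => (if Req_EM_T c m then 1 else (x - c) / (m - c)) * lagrange S' m x
  end.

Lemma lagrange_self S m : lagrange S m m = 1.
Proof.
  induction S as [|c S IH]; simpl; auto. rewrite IH.
  destruct (Req_EM_T c m); [ring|]. field. intro E; apply n; lra.
Qed.

Lemma lagrange_node S m x : In x S -> x <> m -> lagrange S m x = 0.
Proof.
  induction S as [|c S IH]; simpl; intros H hx; [contradiction|].
  destruct H as [->|H].
  - destruct (Req_EM_T x m); [contradiction|]. unfold Rdiv. rewrite Rminus_diag. ring.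
  - rewrite IH; auto; ring.
Qed.

Definition indicator (x m : R) : R := if Req_EM_T x m then 1 else 0.

Lemma lagrange_indicator S m x : In x S -> lagrange S m x = indicator x m.
Proof.
  intros hx. unfold indicator. destruct (Req_EM_T x m) as [->|ne].
  - apply lagrange_self.
  - apply lagrange_node; auto.
Qed.

Lemma sum_list_indicator S x : NoDup S -> In x S -> sum_list S (fun m => indicator x m) = 1.
Proof.
  induction S as [|a S IH]; simpl; intros hN hx; [contradiction|].
  inversion hN; subst. unfold indicator at 1. destruct (Req_EM_T x a) as [->|ne].
  - rewrite (sum_list_ext S _ (fun m => 0 * m)), sum_list_mul_l; [ring|].
    intros m hm. unfold indicator. destruct (Req_EM_T a m) as [->|]; [contradiction|ring].
  - destruct hx as [->|hx]; [contradiction|]. rewrite IH; auto; ring.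
Qed.

Section Symmetrizer.
Variables (n : nat) (A : mat).

Fixpoint spectral_proj (S : list R) (m : R) : mat :=
  match S with
  | nil => delta
  | c :: S' => if Req_EM_T c m then spectral_proj S' m
               else mmul n (fun i j => (A i j - c * delta i j) / (m - c)) (spectral_proj S' m)
  end.

Definition symmetrizer (S : list R) : mat :=
  fun i j => sum_list S (fun m => mmul n (transp (spectral_proj S m)) (spectral_proj S m) i j).

Lemma symmetrizer_sym S i j : symmetrizer S i j = symmetrizer S j i.
Proof. apply sum_list_ext; intros. unfold mmul, transp. apply sumn_ext; intros; ring. Qed.

Variables (T Ti : mat) (d : nat -> R) (S : list R).
Hypothesis HT_r : forall i j, (i < n)%nat -> (j < n)%nat -> mmul n T Ti i j = delta i j.
Hypothesis HT_l : forall i j, (i < n)%nat -> (j < n)%nat -> mmul n Ti T i j = delta i j.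
Hypothesis HAT : forall i j, (i < n)%nat -> (j < n)%nat -> mmul n A T i j = T i j * d j.
Hypothesis HS : forall q, (q < n)%nat -> In (d q) S.

Lemma spectral_proj_diag S' m i j : (i < n)%nat -> (j < n)%nat ->
  spectral_proj S' m i j = sumn n (fun q => T i q * lagrange S' m (d q) * Ti q j).
Proof.
  revert i j. induction S' as [|c S' IH]; intros i j hi hj; simpl.
  - rewrite <- HT_r by auto. unfold mmul. apply sumn_ext; intros; ring.
  - destruct (Req_EM_T c m) as [e|ne].
    + rewrite IH by auto. apply sumn_ext; intros; ring.
    + unfold mmul at 1.
      rewrite (sumn_ext n _ (fun l => sumn n (fun q =>
                 (A i l - c * delta i l) / (m - c) * T l q * (lagrange S' m (d q) * Ti q j))))
        by (intros; rewrite IH, <- sumn_mul_l by auto; apply sumn_ext; intros; ring).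
      rewrite sumn_swap. apply sumn_ext; intros q hq. rewrite sumn_mul_r.
      transitivity ((mmul n A T i q - c * T i q) / (m - c) * (lagrange S' m (d q) * Ti q j)).
      * f_equal. rewrite <- (sumn_delta_l n (fun l => T l q) i) by auto. unfold mmul, Rdiv.
        rewrite <- sumn_mul_l, <- sumn_sub, <- sumn_mul_r. apply sumn_ext; intros; ring.
      * rewrite HAT by auto. unfold Rdiv. ring.
Qed.

Lemma spectral_proj_eq m i j : (i < n)%nat -> (j < n)%nat ->
  spectral_proj S m i j = sumn n (fun q => T i q * indicator (d q) m * Ti q j).
Proof.
  intros hi hj. rewrite spectral_proj_diag by auto.
  apply sumn_ext; intros q hq. rewrite lagrange_indicator; auto.
Qed.

Lemma sum_spectral_proj i j : NoDup S -> (i < n)%nat -> (j < n)%nat ->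
  sum_list S (fun m => spectral_proj S m i j) = delta i j.
Proof.
  intros hN hi hj.
  rewrite (sum_list_ext S _ (fun m => sumn n (fun q => T i q * Ti q j * indicator (d q) m)))
    by (intros; rewrite spectral_proj_eq by auto; apply sumn_ext; intros; ring).
  rewrite sum_list_sumn, <- HT_r by auto. unfold mmul. apply sumn_ext; intros q hq.
  rewrite sum_list_mul_l, sum_list_indicator; auto. ring.
Qed.

Lemma Ti_A q j : (q < n)%nat -> (j < n)%nat -> mmul n Ti A q j = d q * Ti q j.
Proof.
  intros hq hj.
  assert (HA : forall l, (l < n)%nat -> A l j = sumn n (fun r => T l r * (d r * Ti r j))).
  { intros l hl. transitivity (sumn n (fun p => A l p * sumn n (fun r => T p r * Ti r j))).
    - rewrite (sumn_ext n _ (fun p => A l p * delta p j)), sumn_delta_r; auto.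
      intros p hp. fold (mmul n T Ti p j). rewrite HT_r; auto.
    - rewrite sumn_mul_sumn. apply sumn_ext; intros r hr. fold (mmul n A T l r). rewrite HAT by auto. ring. }
  unfold mmul. rewrite (sumn_ext n _ _ (fun l hl => f_equal (Rmult (Ti q l)) (HA l hl))).
  rewrite sumn_mul_sumn, (sumn_ext n _ (fun r => (d r * Ti r j) * delta r q)).
  - rewrite (sumn_delta_r n (fun r => d r * Ti r j)); auto.
  - intros r hr. fold (mmul n Ti T q r). rewrite HT_l, delta_sym by auto. ring.
Qed.

Lemma spectral_proj_A m i j : In m S -> (i < n)%nat -> (j < n)%nat ->
  mmul n (spectral_proj S m) A i j = m * spectral_proj S m i j.
Proof.
  intros hm hi hj. rewrite (mmul_ext_l n _ (fun i q => sumn n (fun p => T i p * indicator (d p) m * Ti p q)))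
    by (intros; apply spectral_proj_eq; auto).
  rewrite spectral_proj_eq by auto. unfold mmul.
  transitivity (sumn n (fun p => T i p * indicator (d p) m * mmul n Ti A p j)).
  { rewrite (sumn_ext n _ (fun l => sumn n (fun p => T i p * indicator (d p) m * (Ti p l * A l j))))
      by (intros; rewrite <- sumn_mul_r; apply sumn_ext; intros; ring).
    rewrite sumn_swap. apply sumn_ext; intros p hp. unfold mmul. rewrite <- sumn_mul_l. auto. }
  rewrite <- sumn_mul_l. apply sumn_ext; intros p hp. rewrite Ti_A by auto.
  unfold indicator. destruct (Req_EM_T (d p) m) as [->|ne]; ring.
Qed.

Lemma mmul_sum_list_l (F : R -> mat) B i j :
  mmul n (fun a b => sum_list S (fun m => F m a b)) B i j = sum_list S (fun m => mmul n (F m) B i j).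
Proof.
  unfold mmul. rewrite (sumn_ext n _ (fun l => sum_list S (fun m => F m i l * B l j))).
  - rewrite <- sum_list_sumn. auto.
  - intros l hl. rewrite sum_list_mul_r. auto.
Qed.

Lemma mmul_sum_list_r (F : R -> mat) B i j :
  mmul n B (fun a b => sum_list S (fun m => F m a b)) i j = sum_list S (fun m => mmul n B (F m) i j).
Proof.
  unfold mmul. rewrite (sumn_ext n _ (fun l => sum_list S (fun m => B i l * F m l j))).
  - rewrite <- sum_list_sumn. auto.
  - intros l hl. rewrite sum_list_mul_l. auto.
Qed.

Lemma symmetrizer_A i j : (i < n)%nat -> (j < n)%nat ->
  mmul n (symmetrizer S) A i j = mmul n (transp A) (symmetrizer S) i j.
Proof.
  intros hi hj. unfold symmetrizer. rewrite mmul_sum_list_l, mmul_sum_list_r.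
  apply sum_list_ext; intros m hm.
  rewrite (mmul_assoc n (transp (spectral_proj S m)) (spectral_proj S m) A), <- (mmul_assoc n (transp A) (transp (spectral_proj S m)) (spectral_proj S m)).
  rewrite (mmul_ext_r n (transp (spectral_proj S m)) _ (fun a b => m * (spectral_proj S m) a b)) by (intros; apply spectral_proj_A; auto).
  rewrite (mmul_ext_l n (mmul n (transp A) (transp (spectral_proj S m))) (fun a b => m * transp (spectral_proj S m) a b)).
  - unfold mmul. apply sumn_ext; intros; ring.
  - intros l hl. unfold transp. unfold mmul at 1.
    rewrite <- (spectral_proj_A m l i) by auto. unfold mmul. apply sumn_ext; intros; ring.
Qed.

Lemma quad_form_gram (X : mat) (v : vec) :
  sumn n (fun i => v i * sumn n (fun j => mmul n (transp X) X i j * v j))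
  = sumn n (fun l => sumn n (fun i => X l i * v i) * sumn n (fun i => X l i * v i)).
Proof.
  unfold mmul, transp.
  rewrite (sumn_ext n _ (fun i => sumn n (fun l => v i * X l i * sumn n (fun j => X l j * v j)))).
  - rewrite sumn_swap. apply sumn_ext; intros l hl. rewrite <- sumn_mul_r. apply sumn_ext; intros; ring.
  - intros i hi. rewrite (sumn_ext n _ (fun j => sumn n (fun l => X l i * X l j * v j)))
      by (intros; rewrite <- sumn_mul_r; auto).
    rewrite sumn_swap, <- sumn_mul_l. apply sumn_ext; intros l hl. rewrite <- !sumn_mul_l.
    apply sumn_ext; intros; ring.
Qed.

Lemma symmetrizer_posdef : NoDup S -> sym_posdef n (symmetrizer S).
Proof.
  intros hN. split; [intros; apply symmetrizer_sym|]. intros v (i0 & hi0 & hv).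
  set (Pv := fun m l => sumn n (fun i => spectral_proj S m l i * v i)).
  unfold symmetrizer. rewrite sum_list_quad.
  rewrite (sum_list_ext S _ (fun m => sumn n (fun l => Pv m l * Pv m l))) by (intros; apply quad_form_gram).
  destruct (Rlt_or_le 0 (sum_list S (fun m => sumn n (fun l => Pv m l * Pv m l)))) as [Hp|Hp]; auto.
  exfalso. apply hv.
  assert (Z : forall m, In m S -> Pv m i0 = 0).
  { intros m hm. apply (sumn_sq_le0 n (Pv m)); auto.
    apply (sum_list_le0 S _ (fun m _ => sumn_sq_ge0 _ _) Hp); auto. }
  rewrite <- (sumn_delta_l n v i0) by auto.
  rewrite (sumn_ext n _ (fun j => sum_list S (fun m => spectral_proj S m i0 j * v j))).
  - rewrite <- sum_list_sumn, (sum_list_ext S _ (fun m => 0 * m)), sum_list_mul_l; [ring|].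
    intros m hm. rewrite Rmult_0_l. apply Z; auto.
  - intros j hj. rewrite sum_list_mul_r, sum_spectral_proj; auto.
Qed.

End Symmetrizer.

(** * Smoothness *)

Lemma continuous3_const c : continuous3 (fun _ _ _ => c).
Proof. intros x y z e he. exists 1; split; [lra|]. intros. unfold Rminus; rewrite Rplus_opp_r, Rabs_R0; auto. Qed.

Lemma continuous3_x : continuous3 (fun x _ _ => x).
Proof. intros x y z e he. exists e; split; auto. Qed.

Lemma continuous3_y : continuous3 (fun _ y _ => y).
Proof. intros x y z e he. exists e; split; auto. Qed.

Lemma continuous3_z : continuous3 (fun _ _ z => z).
Proof. intros x y z e he. exists e; split; auto. Qed.

Lemma continuous3_add f g : continuous3 f -> continuous3 g -> continuous3 (fun x y z => f x y z + g x y z).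
Proof.
  intros hf hg x y z e he.
  destruct (hf x y z (e / 2) ltac:(lra)) as (d1 & hd1 & H1).
  destruct (hg x y z (e / 2) ltac:(lra)) as (d2 & hd2 & H2).
  exists (Rmin d1 d2). split; [apply Rmin_pos; auto|]. intros x' y' z' h1 h2 h3.
  pose proof (Rmin_l d1 d2). pose proof (Rmin_r d1 d2).
  specialize (H1 x' y' z' ltac:(lra) ltac:(lra) ltac:(lra)).
  specialize (H2 x' y' z' ltac:(lra) ltac:(lra) ltac:(lra)).
  replace (f x' y' z' + g x' y' z' - (f x y z + g x y z))
    with ((f x' y' z' - f x y z) + (g x' y' z' - g x y z)) by ring.
  eapply Rle_lt_trans; [apply Rabs_triang | lra].
Qed.

Lemma continuous3_mul f g : continuous3 f -> continuous3 g -> continuous3 (fun x y z => f x y z * g x y z).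
Proof.
  intros hf hg x y z e he.
  set (A := Rabs (f x y z)). set (B := Rabs (g x y z)).
  assert (hA : 0 <= A) by apply Rabs_pos. assert (hB : 0 <= B) by apply Rabs_pos.
  set (e1 := Rmin 1 (e / (A + B + 1))).
  assert (he1 : 0 < e1) by (apply Rmin_pos; [lra | apply Rdiv_lt_0_compat; lra]).
  assert (he1_1 : e1 <= 1) by apply Rmin_l.
  assert (he1_e : e1 * (A + B + 1) <= e).
  { apply (Rle_trans _ (e / (A + B + 1) * (A + B + 1))); [|right; field; lra].
    apply Rmult_le_compat_r; [lra | apply Rmin_r]. }
  destruct (hf x y z e1 he1) as (d1 & hd1 & H1).
  destruct (hg x y z e1 he1) as (d2 & hd2 & H2).
  exists (Rmin d1 d2). split; [apply Rmin_pos; auto|]. intros x' y' z' h1 h2 h3.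
  pose proof (Rmin_l d1 d2). pose proof (Rmin_r d1 d2).
  specialize (H1 x' y' z' ltac:(lra) ltac:(lra) ltac:(lra)).
  specialize (H2 x' y' z' ltac:(lra) ltac:(lra) ltac:(lra)).
  set (df := f x' y' z' - f x y z) in *. set (dg := g x' y' z' - g x y z) in *.
  replace (f x' y' z' * g x' y' z' - f x y z * g x y z)
    with (f x y z * dg + df * g x y z + df * dg) by (unfold df, dg; ring).
  assert (Htri : Rabs (f x y z * dg + df * g x y z + df * dg) <= A * Rabs dg + Rabs df * B + Rabs df * Rabs dg).
  { unfold A, B. rewrite <- !Rabs_mult.
    eapply Rle_trans; [apply Rabs_triang|]. apply Rplus_le_compat_r, Rabs_triang. }
  pose proof (Rabs_pos df). pose proof (Rabs_pos dg). nra.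
Qed.

Lemma Ck3_S_weaken n f : Ck3 (S n) f -> Ck3 n f.
Proof.
  revert f. induction n; intros f H; [simpl in *; tauto|].
  destruct H as [hc hp]. split; auto. intros i hi. destruct (hp i hi) as (g & hg1 & hg2).
  exists g; split; auto.
Qed.

Lemma Ck3_const n c : Ck3 n (fun _ _ _ => c).
Proof.
  revert c. induction n; intros c; [apply continuous3_const|]. split; [apply continuous3_const|].
  intros i hi. exists (fun _ _ _ => 0). split; auto.
  intros x y z. destruct i as [|[|]]; apply derivable_pt_lim_const.
Qed.

Lemma Ck3_add n f g : Ck3 n f -> Ck3 n g -> Ck3 n (fun x y z => f x y z + g x y z).
Proof.
  revert f g; induction n; intros f g hf hg; [apply continuous3_add; auto|].
  destruct hf as [cf pf]; destruct hg as [cg pg]. split; [apply continuous3_add; auto|].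
  intros i hi. destruct (pf i hi) as (f' & hf1 & hf2). destruct (pg i hi) as (g' & hg1 & hg2).
  exists (fun x y z => f' x y z + g' x y z). split; auto.
  intros x y z. specialize (hf1 x y z). specialize (hg1 x y z).
  destruct i as [|[|]]; apply (derivable_pt_lim_plus _ _ _ _ _ hf1 hg1).
Qed.

Lemma Ck3_mul n f g : Ck3 n f -> Ck3 n g -> Ck3 n (fun x y z => f x y z * g x y z).
Proof.
  revert f g; induction n; intros f g hf hg; [apply continuous3_mul; auto|].
  pose proof (Ck3_S_weaken n f hf) as hf0. pose proof (Ck3_S_weaken n g hg) as hg0.
  destruct hf as [cf pf]; destruct hg as [cg pg]. split; [apply continuous3_mul; auto|].
  intros i hi. destruct (pf i hi) as (f' & hf1 & hf2). destruct (pg i hi) as (g' & hg1 & hg2).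
  exists (fun x y z => f' x y z * g x y z + f x y z * g' x y z). split.
  - intros x y z. specialize (hf1 x y z). specialize (hg1 x y z).
    destruct i as [|[|]]; apply (derivable_pt_lim_mult _ _ _ _ _ hf1 hg1).
  - apply Ck3_add; apply IHn; auto.
Qed.

Ltac Ck3_coordinate cont := intros n; destruct n; [apply cont|]; split; [apply cont|];
  intros i hi; destruct i as [|[|[|]]]; try lia;
  first [ exists (fun _ _ _ => 1); split; [intros x y z; apply derivable_pt_lim_id | apply Ck3_const]
        | exists (fun _ _ _ => 0); split; [intros x y z; apply derivable_pt_lim_const | apply Ck3_const] ].

Lemma smooth3_x : smooth3 (fun x _ _ => x).
Proof. Ck3_coordinate continuous3_x. Qed.

Lemma smooth3_y : smooth3 (fun _ y _ => y).
Proof. Ck3_coordinate continuous3_y. Qed.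

Lemma smooth3_z : smooth3 (fun _ _ z => z).
Proof. Ck3_coordinate continuous3_z. Qed.

Lemma smooth3_const c : smooth3 (fun _ _ _ => c).
Proof. intros n; apply Ck3_const. Qed.

Lemma smooth3_add f g : smooth3 f -> smooth3 g -> smooth3 (fun x y z => f x y z + g x y z).
Proof. intros hf hg n; apply Ck3_add; auto. Qed.

Lemma smooth3_mul f g : smooth3 f -> smooth3 g -> smooth3 (fun x y z => f x y z * g x y z).
Proof. intros hf hg n; apply Ck3_mul; auto. Qed.

Lemma smooth3_ext f g : (forall x y z, f x y z = g x y z) -> smooth3 f -> smooth3 g.
Proof.
  intros E H. replace g with f; auto.
  do 3 (apply functional_extensionality; intro). auto.
Qed.

Lemma smooth3_sumn n (F : nat -> R -> R -> R -> R) : (forall l, (l < n)%nat -> smooth3 (F l)) ->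
  smooth3 (fun x y z => sumn n (fun l => F l x y z)).
Proof.
  induction n; intros H; simpl; [apply smooth3_const|].
  apply smooth3_add; [apply IHn; auto | apply (H n); lia].
Qed.

Lemma smooth3_sum_list L (F : R -> R -> R -> R -> R) : (forall m, In m L -> smooth3 (F m)) ->
  smooth3 (fun x y z => sum_list L (fun m => F m x y z)).
Proof. induction L as [|a L IH]; simpl; intros H; [apply smooth3_const | apply smooth3_add; auto]. Qed.

Definition smooth_mat (n : nat) (A : R -> R -> R -> mat) : Prop :=
  forall i j, (i < n)%nat -> (j < n)%nat -> smooth3 (fun x y z => A x y z i j).

Lemma smooth_mat_mmul n A B : smooth_mat n A -> smooth_mat n B ->
  smooth_mat n (fun x y z => mmul n (A x y z) (B x y z)).
Proof.
  intros hA hB i j hi hj. apply (smooth3_sumn n (fun l x y z => A x y z i l * B x y z l j)).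
  intros l hl. apply smooth3_mul; auto.
Qed.

Lemma smooth_mat_spectral_proj n A S m : smooth_mat n A ->
  smooth_mat n (fun x y z => spectral_proj n (A x y z) S m).
Proof.
  intros hA. induction S as [|c S IH]; simpl; [intros i j hi hj; apply smooth3_const|].
  destruct (Req_EM_T c m); auto. apply smooth_mat_mmul; auto. intros i j hi hj.
  apply (smooth3_ext (fun x y z => A x y z i j * / (m - c) + (- c * delta i j / (m - c))));
    [intros; unfold Rdiv; ring|].
  apply smooth3_add; [apply smooth3_mul; auto|]; apply smooth3_const.
Qed.

Lemma smooth_mat_symmetrizer n A S : smooth_mat n A ->
  smooth_mat n (fun x y z => symmetrizer n (A x y z) S).
Proof.
  intros hA i j hi hj. unfold symmetrizer. apply smooth3_sum_list. intros m hm.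
  pose proof (smooth_mat_spectral_proj n A S m hA) as hP.
  apply (smooth_mat_mmul n (fun x y z => transp (spectral_proj n (A x y z) S m))); auto.
  intros a b ha hb. apply hP; auto.
Qed.

Lemma Pmap_expl_linear_in_k c1 c2 c3 c4 x y z v i : (i < 21)%nat ->
  Pmap_expl c1 c2 c3 c4 (kvec x y z) v i = x * Pmap_expl c1 c2 c3 c4 (kvec 1 0 0) v i
    + y * Pmap_expl c1 c2 c3 c4 (kvec 0 1 0) v i + z * Pmap_expl c1 c2 c3 c4 (kvec 0 0 1) v i.
Proof.
  intros hi.
  do 21 (destruct i as [|i];
    [unfold Pmap_expl, Qmap_expl, Linv_expl, Qpre, RmapN, Rmapa, Nof, aof, Kof, kvec, symp, tr3, delta;
     unfold sum3; simpl; unfold Rdiv; ring|]).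
  lia.
Qed.

Lemma Pmat_smooth c1 c2 c3 c4 : c1 + c3 <> 1 -> 2 * (1 + c2) + (c1 + c2 + c3) <> 0 ->
  smooth_mat 21 (fun x y z => Pmat c1 c2 c3 c4 (kvec x y z)).
Proof.
  intros h13 hL i j hi hj.
  apply (smooth3_ext (fun x y z => x * Pmat c1 c2 c3 c4 (kvec 1 0 0) i j + y * Pmat c1 c2 c3 c4 (kvec 0 1 0) i j
                                  + z * Pmat c1 c2 c3 c4 (kvec 0 0 1) i j)).
  - intros x y z. unfold Pmat. rewrite !Pmap_eq, (Pmap_expl_linear_in_k c1 c2 c3 c4 x y z) by auto. auto.
  - repeat apply smooth3_add; apply smooth3_mul; auto using smooth3_x, smooth3_y, smooth3_z, smooth3_const.
Qed.

Definition P_spectrum_list c1 c2 c3 c4 : list R :=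
  nodup Req_EM_T
    (0 :: 1 :: -1 :: sqrt (lamT2 c1 c3) :: - sqrt (lamT2 c1 c3) :: sqrt (lamV2 c1 c3 c4)
       :: - sqrt (lamV2 c1 c3 c4) :: sqrt (lamS2 c1 c2 c3 c4) :: - sqrt (lamS2 c1 c2 c3 c4) :: nil).

Lemma In_P_spectrum_list c1 c2 c3 c4 x : P_spectrum c1 c2 c3 c4 x -> In x (P_spectrum_list c1 c2 c3 c4).
Proof. intros Hx. apply nodup_In. unfold P_spectrum in Hx. repeat destruct Hx as [Hx|Hx]; subst; simpl; tauto. Qed.

Theorem mainTheorem3 (c1 c2 c3 c4 : R)
  (h13 : c1 + c3 <> 1) (h14 : c1 + c4 <> 0)
  (hL : 2 * (1 + c2) + (c1 + c2 + c3) <> 0)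
  (hT : 0 < lamT2 c1 c3) (hV : 0 < lamV2 c1 c3 c4) (hS : 0 < lamS2 c1 c2 c3 c4)
  (hV1 : lamV2 c1 c3 c4 <> 1) (hS1 : lamS2 c1 c2 c3 c4 <> 1) :
  (forall x y z : R, x ^ 2 + y ^ 2 + z ^ 2 = 1 ->
     diagonalizable_with 9 (Mmat c1 c2 c3 c4 (kvec x y z))
       (fun mu => mu = 1 \/ mu = lamT2 c1 c3 \/ mu = lamV2 c1 c3 c4
                  \/ mu = lamS2 c1 c2 c3 c4))
  /\
  (exists H : R -> R -> R -> mat,
     (forall i j, (i < 21)%nat -> (j < 21)%nat -> smooth3 (fun x y z => H x y z i j)) /\
     (forall x y z : R, x ^ 2 + y ^ 2 + z ^ 2 = 1 ->
        sym_posdef 21 (H x y z) /\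
        (forall i j, (i < 21)%nat -> (j < 21)%nat ->
           mmul 21 (H x y z) (Pmat c1 c2 c3 c4 (kvec x y z)) i j
           = mmul 21 (transp (Pmat c1 c2 c3 c4 (kvec x y z))) (H x y z) i j)))
  /\
  (forall x y z : R, x ^ 2 + y ^ 2 + z ^ 2 = 1 ->
     diagonalizable_with 21 (Pmat c1 c2 c3 c4 (kvec x y z))
       (fun mu => mu = 0 \/ mu = 1 \/ mu = -1
                  \/ mu = sqrt (lamT2 c1 c3) \/ mu = - sqrt (lamT2 c1 c3)
                  \/ mu = sqrt (lamV2 c1 c3 c4) \/ mu = - sqrt (lamV2 c1 c3 c4)
                  \/ mu = sqrt (lamS2 c1 c2 c3 c4) \/ mu = - sqrt (lamS2 c1 c2 c3 c4))).
Proof.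
  assert (HP : forall x y z, x ^ 2 + y ^ 2 + z ^ 2 = 1 ->
     diagonalizable_with 21 (Pmat c1 c2 c3 c4 (kvec x y z)) (P_spectrum c1 c2 c3 c4)).
  { intros x y z hs. destruct (sphere_frame x y z hs) as [F HF].
    apply (diagonalizable_with_similar 21 _ (Pmat c1 c2 c3 c4 e3) (rotVW F) (transp (rotVW F)));
      eauto using Pmat_rotVW, rotVW_inv_r, rotVW_inv_l, Pmat_north_diagonalizable. }
  split; [|split; [|exact HP]].
  - intros x y z hs. destruct (sphere_frame x y z hs) as [F HF].
    apply (diagonalizable_with_similar 9 _ (Mmat c1 c2 c3 c4 e3) (rotV F) (transp (rotV F)));
      eauto using Mmat_rotV, rotV_inv_r, rotV_inv_l, Mmat_north_diagonalizable.
  - exists (fun x y z => symmetrizer 21 (Pmat c1 c2 c3 c4 (kvec x y z)) (P_spectrum_list c1 c2 c3 c4)).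
    split; [apply smooth_mat_symmetrizer, Pmat_smooth; auto|].
    intros x y z hs. destruct (HP x y z hs) as (T & Ti & mu & hTr & hTl & hmu & hPT).
    split; [apply (symmetrizer_posdef 21 _ T Ti mu) | intros; apply (symmetrizer_A 21 _ T Ti mu)];
      auto using In_P_spectrum_list; apply NoDup_nodup.
Qed.
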